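(* Let $\alpha>0$ and let $\gamma(s)=(x(s),0,z(s))$, $s\in I$, be a maximal solution of the system $$x'=\cos\psi,\quad z'=\sin\psi,\quad \psi'=\alpha\,\frac{z\cos\psi-x\sin\psi}{x^2+z^2}-\frac{\sin\psi}{x},$$ with initial conditions $(x(0),z(0))=(0,1)$, $\psi(0)=0$. Then $\gamma$ is a graph over the $x$-axis. Consequently, the surface of revolution about the $z$-axis generated by $\gamma$ is an entire graph over the plane $z=0$.
   Context: The system describes the arc-length parametrized generating curve $\gamma$ of a surface of revolution $(x(s)\cos t,x(s)\sin t,z(s))$ about the $z$-axis satisfying $H=\alpha\langle\nu,p\rangle/|p|^2$ ($H$ the sum of the principal curvatures), where $\psi$ is the angle of the tangent of $\gamma$. The system is singular at $x=0$; the initial conditions mean that $\gamma$ meets the $z$-axis orthogonally at $(0,0,1)$, the solution near $s=0$ being the profile of a $C^2$ rotational graph $z=u(r)$ with $u(0)=1$, $u'(0)=0$. *)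

From Stdlib Require Import Reals.
From Coquelicot Require Import Coquelicot.
Open Scope R_scope.

Definition in_oint (a b : Rbar) (s : R) : Prop := Rbar_lt a s /\ Rbar_lt s b.

(* (x,z,psi) solves, on the open interval (a,b) containing 0, the system
     x' = cos psi,  z' = sin psi,
     psi' = alpha (z cos psi - x sin psi)/(x^2+z^2) - sin psi / x
   with x(0)=0, z(0)=1, psi(0)=0.  The system is singular at x = 0, so the
   third equation is required for s <> 0 (where x(s) <> 0 is required);
   at s = 0 all three functions are still required to be differentiable
   (the solution is the profile of a C^2 rotational graph near s = 0). *)
Definition is_solution (alpha : R) (a b : Rbar) (x z psi : R -> R) : Prop :=
  Rbar_lt a 0 /\ Rbar_lt 0 b /\
  x 0 = 0 /\ z 0 = 1 /\ psi 0 = 0 /\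
  (forall s, in_oint a b s ->
     is_derive x s (cos (psi s)) /\ is_derive z s (sin (psi s)) /\
     ex_derive psi s) /\
  (forall s, in_oint a b s -> s <> 0 ->
     x s <> 0 /\
     is_derive psi s
       (alpha * (z s * cos (psi s) - x s * sin (psi s)) / (x s ^ 2 + z s ^ 2)
        - sin (psi s) / x s)).

Definition is_maximal_solution (alpha : R) (a b : Rbar) (x z psi : R -> R) : Prop :=
  is_solution alpha a b x z psi /\
  forall (a' b' : Rbar) (x' z' psi' : R -> R),
    is_solution alpha a' b' x' z' psi' ->
    Rbar_le a' a -> Rbar_le b b' ->
    (forall s, in_oint a b s -> x' s = x s /\ z' s = z s /\ psi' s = psi s) ->
    a' = a /\ b' = b.

From Stdlib Require Import Reals Lra Lia Psatz Classical.
From Coquelicot Require Import Coquelicot.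
Open Scope R_scope.

(* The angle [psi] never reaches [+-PI/2]: at a first such time [x > 0], and the
   sign of [psi'] there pushes [psi] back.  Hence [x' = cos psi > 0].

   Solutions are unique.  Away from [s = 0] the system is Lipschitz; at the
   singular point one compares the moments [x sin psi] instead of [psi], whose
   derivative [alpha x cos psi <nu,p>/|p|^2] is regular, and recovers [psi] from
   them using [x(s) >= s/2].  Applied to the reflected solution
   [s |-> (-x(-s), z(-s), -psi(-s))], uniqueness makes [x] odd and [z] even.

   A maximal solution is global: near a finite endpoint [x] stays away from [0],
   so Picard iteration with a uniform time step extends it.  For [s >= 1],
   [cos psi] is bounded below, because where it is small [- sin psi / x]
   dominates [psi'] and makes [cos psi] increase; so [x] maps onto [R].  Each
   circle [x = r] of the surface is then met by exactly the two parameters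
   [s] and [-s], at the same height [z]. *)

Lemma is_derive_continuity_pt (f : R -> R) t l : is_derive f t l -> continuity_pt f t.
Proof. intros H. apply continuity_pt_filterlim, (ex_derive_continuous f t). now exists l. Qed.

Lemma continuity_pt_ball (f : R -> R) t : continuity_pt f t -> forall eps, 0 < eps ->
  exists d, 0 < d /\ forall u, Rabs (u - t) < d -> Rabs (f u - f t) < eps.
Proof.
  intros H eps Heps. destruct (H eps Heps) as [d [Hd Hball]]. exists d; split; auto.
  intros u Hu. destruct (Req_dec u t) as [->|Hne].
  - now rewrite Rminus_diag, Rabs_R0.
  - apply Hball. split; [split; [exact I|auto]|exact Hu].
Qed.

Lemma mean_value (f df : R -> R) a b : a <= b -> (forall u, a <= u <= b -> is_derive f u (df u)) ->
  exists c, a <= c <= b /\ f b - f a = df c * (b - a).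
Proof.
  intros Hab Hd.
  destruct (MVT_gen f a b df) as [c [Hc Heq]]; rewrite Rmin_left, Rmax_right in * by lra.
  - intros u Hu. apply Hd; lra.
  - intros u Hu. exact (is_derive_continuity_pt _ _ _ (Hd u Hu)).
  - now exists c.
Qed.

Lemma increment_bound (f df : R -> R) a b K : a <= b ->
  (forall u, a <= u <= b -> is_derive f u (df u)) -> (forall u, a <= u <= b -> Rabs (df u) <= K) ->
  Rabs (f b - f a) <= K * (b - a).
Proof.
  intros Hab Hd HK. destruct (mean_value f df a b Hab Hd) as [c [Hc ->]].
  rewrite Rabs_mult, (Rabs_right (b - a)) by lra.
  apply Rmult_le_compat_r; [lra|]. now apply HK.
Qed.

Lemma lipschitz_of_derive_bound (f df : R -> R) K : (forall u, is_derive f u (df u)) ->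
  (forall u, Rabs (df u) <= K) -> forall u v, Rabs (f u - f v) <= K * Rabs (u - v).
Proof.
  intros Hd HK u v. destruct (Rle_or_lt v u).
  - rewrite (Rabs_right (u - v)) by lra. now apply (increment_bound f df).
  - rewrite Rabs_minus_sym, (Rabs_minus_sym u), (Rabs_right (v - u)) by lra.
    apply (increment_bound f df); auto; lra.
Qed.

Lemma Rabs_cos_sub_le u v : Rabs (cos u - cos v) <= Rabs (u - v).
Proof.
  rewrite <- (Rmult_1_l (Rabs (u - v))). apply (lipschitz_of_derive_bound cos (fun t => - sin t)).
  - intros t. auto_derive; auto; ring.
  - intros t. rewrite Rabs_Ropp. apply Rabs_le, SIN_bound.
Qed.

Lemma Rabs_sin_sub_le u v : Rabs (sin u - sin v) <= Rabs (u - v).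
Proof.
  rewrite <- (Rmult_1_l (Rabs (u - v))). apply (lipschitz_of_derive_bound sin cos).
  - intros t. auto_derive; auto; ring.
  - intros t. apply Rabs_le, COS_bound.
Qed.

Lemma Rabs_cos_le1 u : Rabs (cos u) <= 1.
Proof. apply Rabs_le, COS_bound. Qed.

Lemma Rabs_sin_le1 u : Rabs (sin u) <= 1.
Proof. apply Rabs_le, SIN_bound. Qed.

Lemma cos_ge_half u : Rabs u <= 1/2 -> 1/2 <= cos u.
Proof.
  intros Hu. pose proof PI2_1.
  replace (cos u) with (cos (Rabs u)).
  - rewrite <- cos_PI3. apply cos_decr_1; try lra. apply Rabs_pos.
  - destruct (Rle_or_lt 0 u); [rewrite Rabs_right|rewrite Rabs_left, cos_neg]; auto; lra.
Qed.

Lemma Rabs_sub_le_sin u v : Rabs u <= 1/2 -> Rabs v <= 1/2 ->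
  Rabs (u - v) <= 2 * Rabs (sin u - sin v).
Proof.
  assert (Hmono : forall u v, Rabs u <= 1/2 -> Rabs v <= 1/2 -> v <= u ->
    Rabs (u - v) <= 2 * Rabs (sin u - sin v)).
  { clear u v. intros u v Hu Hv Huv.
    destruct (mean_value sin cos v u Huv) as [c [Hc ->]].
    { intros t _. auto_derive; auto; ring. }
    assert (Hcos : 1/2 <= cos c).
    { apply cos_ge_half, Rabs_le. apply Rabs_le_between in Hu, Hv. lra. }
    rewrite Rabs_mult, !(Rabs_right (u - v)), Rabs_right by lra. nra. }
  intros Hu Hv. destruct (Rle_or_lt v u); [auto|].
  rewrite Rabs_minus_sym, (Rabs_minus_sym (sin u)). apply Hmono; auto; lra.
Qed.

Lemma derive_nonneg_at_left_max (f : R -> R) t l d : 0 < d -> is_derive f t l ->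
  (forall u, t - d <= u < t -> f u <= f t) -> 0 <= l.
Proof.
  intros Hd Hder Hle. apply is_derive_Reals in Hder.
  destruct (Rle_or_lt 0 l) as [|Hl]; auto.
  destruct (Hder (- l / 2) ltac:(lra)) as [del Hdel].
  pose proof (cond_pos del).
  set (k := - Rmin (del / 2) d).
  assert (Hm : 0 < Rmin (del / 2) d <= del / 2 /\ Rmin (del / 2) d <= d).
  { split; [split|]; [apply Rmin_glb_lt; lra|apply Rmin_l|apply Rmin_r]. }
  assert (Hk : k <> 0) by (unfold k; lra).
  specialize (Hdel k Hk ltac:(unfold k; rewrite Rabs_left; lra)).
  specialize (Hle (t + k) ltac:(unfold k; lra)).
  apply Rabs_def2 in Hdel.
  assert (Hq : (f (t + k) - f t) / k * k = f (t + k) - f t) by (field; auto).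
  assert (k < 0) by (unfold k; lra). nra.
Qed.

Lemma derive_nonpos_at_left_min (f : R -> R) t l d : 0 < d -> is_derive f t l ->
  (forall u, t - d <= u < t -> f t <= f u) -> l <= 0.
Proof.
  intros Hd Hder Hle.
  enough (0 <= - l) by lra.
  apply (derive_nonneg_at_left_max (fun u => - f u) t (- l) d Hd).
  - exact (is_derive_opp f t l Hder).
  - intros u Hu. specialize (Hle u Hu). lra.
Qed.

Lemma first_hitting_time (f : R -> R) a0 a1 K :
  a0 <= a1 -> (forall u, a0 <= u <= a1 -> continuity_pt f u) -> f a0 < K -> K <= f a1 ->
  exists t, a0 < t <= a1 /\ f t = K /\ forall u, a0 <= u < t -> f u < K.
Proof.
  intros Ha Hc H0 H1.
  set (E := fun u => a0 <= u <= a1 /\ forall v, a0 <= v <= u -> f v < K).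
  assert (HE0 : E a0) by (split; [lra|intros v Hv; now replace v with a0 by lra]).
  destruct (completeness E) as [m [Hub Hlub]].
  { exists a1. intros u [Hu _]. lra. }
  { now exists a0. }
  assert (Hm : a0 <= m <= a1) by (split; [now apply Hub|apply Hlub; intros u [Hu _]; lra]).
  assert (Hbefore : forall u, a0 <= u < m -> f u < K).
  { intros u Hu. destruct (classic (exists e, E e /\ u < e)) as [[e [[_ He] Hue]]|Hn].
    - apply He. lra.
    - enough (m <= u) by lra. apply Hlub. intros e He.
      destruct (Rle_or_lt e u); auto. exfalso. apply Hn. now exists e. }
  destruct (Req_dec (f m) K) as [Heq|Hne].
  { exists m. repeat split; try lra; auto. destruct (Req_dec m a0) as [->|]; lra. }
  exfalso.
  destruct (continuity_pt_ball f m (Hc m Hm) (Rabs (f m - K))) as [d [Hd Hball]].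
  { now apply Rabs_pos_lt, Rminus_eq_contra. }
  destruct (Rlt_or_le (f m) K) as [Hlt|Hge].
  - destruct (Req_dec m a1) as [->|Hne1]; [lra|].
    set (e := Rmin (m + d / 2) a1).
    assert (He : m < e <= m + d / 2 /\ e <= a1).
    { split; [split|]; [apply Rmin_glb_lt; lra|apply Rmin_l|apply Rmin_r]. }
    enough (E e) by (assert (e <= m) by (apply Hub; auto); lra).
    split; [lra|]. intros v Hv. destruct (Rlt_or_le v m); [apply Hbefore; lra|].
    specialize (Hball v ltac:(rewrite Rabs_right; lra)).
    rewrite (Rabs_left (f m - K)) in Hball by lra. apply Rabs_def2 in Hball. lra.
  - destruct (Req_dec m a0) as [<-|Hne0]; [lra|].
    set (e := Rmax (m - d / 2) a0).
    assert (He : m - d / 2 <= e < m /\ a0 <= e).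
    { split; [split|]; [apply Rmax_l|apply Rmax_lub_lt; lra|apply Rmax_r]. }
    specialize (Hball e ltac:(rewrite Rabs_left; lra)).
    specialize (Hbefore e ltac:(lra)).
    rewrite (Rabs_right (f m - K)) in Hball by lra. apply Rabs_def2 in Hball. lra.
Qed.

Lemma self_bounded_vanishes (D : R -> R) s0 s1 K :
  s0 <= s1 -> 0 <= K -> K * (s1 - s0) < 1 ->
  (forall u, s0 <= u <= s1 -> continuity_pt D u) -> (forall u, 0 <= D u) ->
  (forall m, s0 <= m <= s1 -> (forall u, s0 <= u <= m -> D u <= D m) ->
     D m <= K * (m - s0) * D m) ->
  forall u, s0 <= u <= s1 -> D u = 0.
Proof.
  intros Hs HK Hsmall Hc Hpos Hself.
  destruct (continuity_ab_maj D s0 s1 Hs Hc) as [m [Hmax Hm]].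
  assert (HDm : D m <= 0).
  { specialize (Hself m Hm (fun u Hu => Hmax u ltac:(lra))).
    assert (K * (m - s0) * D m <= K * (s1 - s0) * D m).
    { apply Rmult_le_compat_r; [apply Hpos|apply Rmult_le_compat_l; lra]. }
    pose proof (Hpos m). nra. }
  intros u Hu. pose proof (Hmax u Hu). pose proof (Hpos u). lra.
Qed.

Lemma interval_induction (Q : R -> Prop) s0 s1 del : 0 < del -> Q s0 ->
  (forall t u, s0 <= t <= u -> u <= s1 -> u - t <= del ->
     (forall v, s0 <= v <= t -> Q v) -> Q u) ->
  forall u, s0 <= u <= s1 -> Q u.
Proof.
  intros Hdel H0 Hstep.
  assert (Hn : forall n u, s0 <= u <= s1 -> u <= s0 + INR n * del -> Q u).
  { induction n as [|n IH]; intros u Hu Hun.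
    - simpl in Hun. replace u with s0 by lra. exact H0.
    - destruct (Rle_or_lt u (s0 + INR n * del)) as [Hle|Hlt]; [now apply IH|].
      rewrite S_INR in Hun. pose proof (pos_INR n).
      apply (Hstep (s0 + INR n * del) u); try nra.
      intros v Hv. apply IH; lra. }
  intros u Hu. destruct (INR_unbounded ((u - s0) / del)) as [n Hnu].
  apply (Hn n u Hu).
  assert ((u - s0) / del * del = u - s0) by (field; lra). nra.
Qed.
Lemma in_oint_convex a b s1 s2 u :
  in_oint a b s1 -> in_oint a b s2 -> s1 <= u <= s2 -> in_oint a b u.
Proof. unfold in_oint; destruct a, b; simpl; intros; lra. Qed.

Lemma in_oint_opp a b s : in_oint (Rbar_opp b) (Rbar_opp a) s <-> in_oint a b (- s).
Proof. unfold in_oint; destruct a, b; simpl; split; intros; lra. Qed.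

Lemma in_oint_whole s : in_oint m_infty p_infty s.
Proof. split; exact I. Qed.

(** * The profile system *)

Definition psi_rhs alpha x z p :=
  alpha * (z * cos p - x * sin p) / (x ^ 2 + z ^ 2) - sin p / x.

Definition normal_ratio x z p := (z * cos p - x * sin p) / (x ^ 2 + z ^ 2).

Lemma psi_rhs_normal_ratio alpha x z p :
  psi_rhs alpha x z p = alpha * normal_ratio x z p - sin p / x.
Proof. unfold psi_rhs, normal_ratio, Rdiv. ring. Qed.

Section Solution.
Context {alpha : R} {a b : Rbar} {x z psi : R -> R} (sol : is_solution alpha a b x z psi).

Lemma sol_in_oint0 : in_oint a b 0.
Proof. destruct sol as (Ha & Hb & _). now split. Qed.

Lemma sol_init : x 0 = 0 /\ z 0 = 1 /\ psi 0 = 0.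
Proof. destruct sol as (_ & _ & H0 & H1 & H2 & _). auto. Qed.

Lemma sol_derive_x s : in_oint a b s -> is_derive x s (cos (psi s)).
Proof. destruct sol as (_ & _ & _ & _ & _ & H & _). apply H. Qed.

Lemma sol_derive_z s : in_oint a b s -> is_derive z s (sin (psi s)).
Proof. destruct sol as (_ & _ & _ & _ & _ & H & _). apply H. Qed.

Lemma sol_ex_derive_psi s : in_oint a b s -> ex_derive psi s.
Proof. destruct sol as (_ & _ & _ & _ & _ & H & _). apply H. Qed.

Lemma sol_x_neq0 s : in_oint a b s -> s <> 0 -> x s <> 0.
Proof. destruct sol as (_ & _ & _ & _ & _ & _ & H). apply H. Qed.

Lemma sol_derive_psi s : in_oint a b s -> s <> 0 ->
  is_derive psi s (psi_rhs alpha (x s) (z s) (psi s)).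
Proof. destruct sol as (_ & _ & _ & _ & _ & _ & H). apply H. Qed.

Lemma sol_continuity_psi s : in_oint a b s -> continuity_pt psi s.
Proof.
  intros Hs. destruct (sol_ex_derive_psi s Hs) as [l Hl].
  exact (is_derive_continuity_pt _ _ _ Hl).
Qed.

Lemma sol_in_oint_between s u : in_oint a b s -> 0 <= u <= s -> in_oint a b u.
Proof. intros Hs Hu. exact (in_oint_convex a b 0 s u sol_in_oint0 Hs Hu). Qed.

Lemma sol_growth u : 0 <= u -> in_oint a b u -> Rabs (x u) <= u /\ Rabs (z u - 1) <= u.
Proof.
  intros Hu Hi. destruct sol_init as (Hx0 & Hz0 & _).
  assert (Hin : forall v, 0 <= v <= u -> in_oint a b v) by (intros; now apply (sol_in_oint_between u)).
  split.
  - replace (x u) with (x u - x 0) by (rewrite Hx0; ring).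
    replace u with (1 * (u - 0)) at 2 by ring.
    apply (increment_bound x (fun v => cos (psi v))); auto.
    + intros v Hv. apply sol_derive_x, Hin, Hv.
    + intros v _. apply Rabs_cos_le1.
  - rewrite <- Hz0. replace u with (1 * (u - 0)) at 2 by ring.
    apply (increment_bound z (fun v => sin (psi v))); auto.
    + intros v Hv. apply sol_derive_z, Hin, Hv.
    + intros v _. apply Rabs_sin_le1.
Qed.

End Solution.

Lemma is_derive_comp_opp (f : R -> R) s l : is_derive f (- s) l -> is_derive (fun u => f (- u)) s (- l).
Proof.
  intros H. assert (Hopp : is_derive Ropp s (-1)) by (auto_derive; auto; ring).
  replace (- l) with (scal (-1) l) by (unfold scal; simpl; unfold mult; simpl; ring).
  exact (is_derive_comp f Ropp s l (-1) H Hopp).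
Qed.

Lemma reflect_solution alpha a b x z psi : is_solution alpha a b x z psi ->
  is_solution alpha (Rbar_opp b) (Rbar_opp a)
    (fun s => - x (- s)) (fun s => z (- s)) (fun s => - psi (- s)).
Proof.
  intros H. destruct (sol_init H) as (Hx0 & Hz0 & Hp0).
  pose proof (sol_in_oint0 H) as [Ha Hb].
  assert (Hopp : forall f s l, is_derive f (- s) l -> is_derive (fun u => - f (- u)) s l).
  { intros f s l Hf. rewrite <- (Ropp_involutive l).
    apply (is_derive_opp (fun u => f (- u))), is_derive_comp_opp, Hf. }
  refine (conj _ (conj _ (conj _ (conj _ (conj _ (conj _ _)))))).
  - destruct b; simpl in *; auto; lra.
  - destruct a; simpl in *; auto; lra.
  - rewrite Ropp_0, Hx0. ring.
  - now rewrite Ropp_0.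
  - rewrite Ropp_0, Hp0. ring.
  - intros s Hs. apply in_oint_opp in Hs. split; [|split].
    + rewrite cos_neg. apply Hopp, (sol_derive_x H _ Hs).
    + rewrite sin_neg. apply is_derive_comp_opp, (sol_derive_z H _ Hs).
    + destruct (sol_ex_derive_psi H _ Hs) as [l Hl]. exists l. now apply Hopp.
  - intros s Hs Hs0. apply in_oint_opp in Hs. assert (Hs0' : - s <> 0) by lra.
    pose proof (sol_x_neq0 H _ Hs Hs0') as Hx. split; [lra|].
    replace (alpha * (z (- s) * cos (- psi (- s)) - - x (- s) * sin (- psi (- s))) /
      ((- x (- s)) ^ 2 + z (- s) ^ 2) - sin (- psi (- s)) / - x (- s))
      with (psi_rhs alpha (x (- s)) (z (- s)) (psi (- s))).
    + apply Hopp, (sol_derive_psi H _ Hs Hs0').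
    + unfold psi_rhs. rewrite cos_neg, sin_neg. field. repeat split; auto; nra.
Qed.

Lemma reflect_maximal alpha a b x z psi : is_maximal_solution alpha a b x z psi ->
  is_maximal_solution alpha (Rbar_opp b) (Rbar_opp a)
    (fun s => - x (- s)) (fun s => z (- s)) (fun s => - psi (- s)).
Proof.
  intros [H Hmax]. split; [now apply reflect_solution|].
  intros a' b' x' z' p' H' Ha Hb Hagree.
  destruct (Hmax (Rbar_opp b') (Rbar_opp a') _ _ _ (reflect_solution _ _ _ _ _ _ H')) as [E1 E2].
  - destruct a, b'; simpl in *; auto; lra.
  - destruct b, a'; simpl in *; auto; lra.
  - intros s Hs. rewrite <- (Ropp_involutive s) in Hs. apply in_oint_opp in Hs.
    destruct (Hagree _ Hs) as (A1 & A2 & A3). rewrite Ropp_involutive in A1, A2, A3.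
    repeat split; lra.
  - rewrite <- E1, <- E2, !Rbar_opp_involutive. auto.
Qed.

Lemma psi_rhs_PI2_neg alpha x z : 0 <= alpha -> 0 < x -> psi_rhs alpha x z (PI / 2) < 0.
Proof.
  intros Ha Hx. unfold psi_rhs. rewrite cos_PI2, sin_PI2.
  assert (0 <= alpha * x / (x ^ 2 + z ^ 2)) by (apply Rdiv_le_0_compat; nra).
  assert (0 < 1 / x) by (apply Rdiv_lt_0_compat; lra).
  replace (alpha * (z * 0 - x * 1) / (x ^ 2 + z ^ 2)) with (- (alpha * x / (x ^ 2 + z ^ 2)))
    by (field; nra).
  lra.
Qed.

Lemma psi_rhs_mPI2_pos alpha x z : 0 <= alpha -> 0 < x -> 0 < psi_rhs alpha x z (- (PI / 2)).
Proof.
  intros Ha Hx. unfold psi_rhs. rewrite cos_neg, sin_neg, cos_PI2, sin_PI2.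
  assert (0 <= alpha * x / (x ^ 2 + z ^ 2)) by (apply Rdiv_le_0_compat; nra).
  assert (0 < 1 / x) by (apply Rdiv_lt_0_compat; lra).
  replace (alpha * (z * 0 - x * - (1)) / (x ^ 2 + z ^ 2)) with (alpha * x / (x ^ 2 + z ^ 2))
    by (field; nra).
  replace (- (1) / x) with (- (1 / x)) by (field; lra).
  lra.
Qed.

Lemma abs_psi_lt_PI2_fwd {alpha a b x z psi} (sol : is_solution alpha a b x z psi) :
  0 <= alpha -> forall s, 0 <= s -> in_oint a b s -> Rabs (psi s) < PI / 2.
Proof.
  intros Hal s Hs Hi. pose proof PI2_1.
  destruct (sol_init sol) as (Hx0 & _ & Hp0).
  destruct (Rlt_or_le (Rabs (psi s)) (PI / 2)) as [|Hge]; auto. exfalso.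
  assert (HI : forall u, 0 <= u <= s -> in_oint a b u)
    by (intros; now apply (sol_in_oint_between sol s)).
  destruct (first_hitting_time (fun u => Rabs (psi u)) 0 s (PI / 2) Hs) as (t & Ht & Hpt & Hbef).
  - intros u Hu. apply (continuity_pt_comp psi Rabs);
      [apply (sol_continuity_psi sol), HI, Hu|apply Rcontinuity_abs].
  - rewrite Hp0, Rabs_R0. lra.
  - auto.
  - cbv beta in Hpt, Hbef.
    assert (Hdx : forall u, 0 <= u <= t -> is_derive x u (cos (psi u))).
    { intros u Hu. apply (sol_derive_x sol), HI. lra. }
    assert (Hxt : 0 < x t).
    { destruct (mean_value x (fun u => cos (psi u)) 0 (t / 2)) as [c [Hc Hx1]];
        [lra|intros; apply Hdx; lra|].
      destruct (mean_value x (fun u => cos (psi u)) (t / 2) t) as [c' [Hc' Hx2]];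
        [lra|intros; apply Hdx; lra|].
      assert (Hc1 : 0 < cos (psi c)).
      { specialize (Hbef c ltac:(lra)). apply Rabs_def2 in Hbef. apply cos_gt_0; lra. }
      assert (Hc2 : 0 <= cos (psi c')).
      { assert (Hle : Rabs (psi c') <= PI / 2).
        { destruct (Req_dec c' t) as [->|]; [lra|]. left. apply Hbef. lra. }
        apply Rabs_le_between in Hle. apply cos_ge_0; lra. }
      nra. }
    pose proof (sol_derive_psi sol t (HI t ltac:(lra)) ltac:(lra)) as Hd.
    destruct (Rle_or_lt 0 (psi t)).
    + rewrite Rabs_right in Hpt by lra. rewrite Hpt in Hd.
      pose proof (psi_rhs_PI2_neg alpha (x t) (z t) Hal Hxt).
      enough (0 <= psi_rhs alpha (x t) (z t) (PI / 2)) by lra.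
      apply (derive_nonneg_at_left_max psi t _ t); auto; [lra|].
      intros u Hu. specialize (Hbef u ltac:(lra)). apply Rabs_def2 in Hbef. lra.
    + rewrite Rabs_left in Hpt by lra. replace (psi t) with (- (PI / 2)) in Hd by lra.
      pose proof (psi_rhs_mPI2_pos alpha (x t) (z t) Hal Hxt).
      enough (psi_rhs alpha (x t) (z t) (- (PI / 2)) <= 0) by lra.
      apply (derive_nonpos_at_left_min psi t _ t); auto; [lra|].
      intros u Hu. specialize (Hbef u ltac:(lra)). apply Rabs_def2 in Hbef. lra.
Qed.

Section Monotonicity.
Context {alpha : R} {a b : Rbar} {x z psi : R -> R} (sol : is_solution alpha a b x z psi).
Hypothesis alpha_ge0 : 0 <= alpha.

Lemma abs_psi_lt_PI2 s : in_oint a b s -> Rabs (psi s) < PI / 2.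
Proof.
  intros Hs. destruct (Rle_or_lt 0 s).
  - now apply (abs_psi_lt_PI2_fwd sol).
  - rewrite <- (Ropp_involutive s), <- Rabs_Ropp.
    apply (abs_psi_lt_PI2_fwd (reflect_solution _ _ _ _ _ _ sol)); [auto|lra|].
    apply in_oint_opp. now rewrite Ropp_involutive.
Qed.

Lemma cos_psi_pos s : in_oint a b s -> 0 < cos (psi s).
Proof.
  intros Hs. pose proof (abs_psi_lt_PI2 s Hs) as Hb. apply Rabs_def2 in Hb. apply cos_gt_0; lra.
Qed.

Lemma x_strictly_increasing s1 s2 : in_oint a b s1 -> in_oint a b s2 -> s1 < s2 -> x s1 < x s2.
Proof.
  intros H1 H2 Hlt.
  assert (Hin : forall u, s1 <= u <= s2 -> in_oint a b u)
    by (intros; now apply (in_oint_convex a b s1 s2)).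
  destruct (mean_value x (fun u => cos (psi u)) s1 s2) as [c [Hc Heq]]; [lra|..].
  - intros u Hu. apply (sol_derive_x sol), Hin, Hu.
  - pose proof (cos_psi_pos c (Hin c Hc)). nra.
Qed.

Lemma x_pos s : in_oint a b s -> 0 < s -> 0 < x s.
Proof.
  intros Hs Hpos. destruct (sol_init sol) as [<- _].
  exact (x_strictly_increasing 0 s (sol_in_oint0 sol) Hs Hpos).
Qed.

End Monotonicity.

(** * Lipschitz estimates and uniqueness *)

Definition coord (i : nat) (p : R * R * R) : R :=
  match i with O => fst (fst p) | 1%nat => snd (fst p) | _ => snd p end.

Definition dist3 (p q : R * R * R) : R :=
  Rabs (coord 0 p - coord 0 q) + Rabs (coord 1 p - coord 1 q) + Rabs (coord 2 p - coord 2 q).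

Lemma dist3_ge0 p q : 0 <= dist3 p q.
Proof.
  unfold dist3. pose proof (Rabs_pos (coord 0 p - coord 0 q)).
  pose proof (Rabs_pos (coord 1 p - coord 1 q)). pose proof (Rabs_pos (coord 2 p - coord 2 q)). lra.
Qed.

Lemma dist3_coord_le i p q : Rabs (coord i p - coord i q) <= dist3 p q.
Proof.
  unfold dist3. pose proof (Rabs_pos (coord 0 p - coord 0 q)).
  pose proof (Rabs_pos (coord 1 p - coord 1 q)). pose proof (Rabs_pos (coord 2 p - coord 2 q)).
  destruct i as [|[|i]]; cbn [coord] in *; lra.
Qed.

Lemma Rabs_mult_le u v U V : Rabs u <= U -> Rabs v <= V -> Rabs (u * v) <= U * V.
Proof. intros. rewrite Rabs_mult. apply Rmult_le_compat; auto; apply Rabs_pos. Qed.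

Lemma Rabs_div_le u Q U rho : 0 < rho -> rho <= Q -> Rabs u <= U -> Rabs (u / Q) <= U / rho.
Proof.
  intros Hr HQ Hu. unfold Rdiv. rewrite Rabs_mult, Rabs_inv, (Rabs_right Q) by lra.
  apply Rmult_le_compat; auto; try apply Rabs_pos.
  - left; apply Rinv_0_lt_compat; lra.
  - apply Rinv_le_contravar; lra.
Qed.

Lemma Rabs_cos_sin_comb_le B x z p q : Rabs x <= B -> Rabs z <= B ->
  Rabs (z * cos p - x * sin q) <= 2 * B.
Proof.
  intros Hx Hz. unfold Rminus. eapply Rle_trans; [apply Rabs_triang|]. rewrite Rabs_Ropp.
  pose proof (Rabs_mult_le _ _ _ _ Hz (Rabs_cos_le1 p)).
  pose proof (Rabs_mult_le _ _ _ _ Hx (Rabs_sin_le1 q)). lra.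
Qed.

Lemma normal_ratio_bound rho B x z p : 0 < rho -> rho <= x ^ 2 + z ^ 2 ->
  Rabs x <= B -> Rabs z <= B -> Rabs (normal_ratio x z p) <= 2 * B / rho.
Proof. intros. apply Rabs_div_le; auto. now apply Rabs_cos_sin_comb_le. Qed.

Definition ratio_lip_const rho B := (1 + 2 * B) / rho + 4 * B ^ 2 / rho ^ 2.

Lemma normal_numerator_lipschitz B x1 z1 p1 x2 z2 p2 : Rabs x2 <= B -> Rabs z2 <= B ->
  Rabs ((z1 * cos p1 - x1 * sin p1) - (z2 * cos p2 - x2 * sin p2))
    <= (1 + 2 * B) * dist3 (x1, z1, p1) (x2, z2, p2).
Proof.
  intros Hx2 Hz2. unfold dist3; cbn [coord fst snd].
  replace ((z1 * cos p1 - x1 * sin p1) - (z2 * cos p2 - x2 * sin p2))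
    with ((z1 - z2) * cos p1 + z2 * (cos p1 - cos p2)
          + (- ((x1 - x2) * sin p1) + - (x2 * (sin p1 - sin p2))))
    by ring.
  pose proof (Rabs_mult_le _ _ _ _ (Rle_refl (Rabs (z1 - z2))) (Rabs_cos_le1 p1)).
  pose proof (Rabs_mult_le _ _ _ _ Hz2 (Rabs_cos_sub_le p1 p2)).
  pose proof (Rabs_mult_le _ _ _ _ (Rle_refl (Rabs (x1 - x2))) (Rabs_sin_le1 p1)).
  pose proof (Rabs_mult_le _ _ _ _ Hx2 (Rabs_sin_sub_le p1 p2)).
  pose proof (Rabs_triang ((z1 - z2) * cos p1) (z2 * (cos p1 - cos p2))).
  pose proof (Rabs_triang (- ((x1 - x2) * sin p1)) (- (x2 * (sin p1 - sin p2)))).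
  pose proof (Rabs_triang ((z1 - z2) * cos p1 + z2 * (cos p1 - cos p2))
    (- ((x1 - x2) * sin p1) + - (x2 * (sin p1 - sin p2)))).
  rewrite !Rabs_Ropp in *.
  assert (0 <= B) by (pose proof (Rabs_pos x2); lra).
  pose proof (Rabs_pos (x1 - x2)). pose proof (Rabs_pos (z1 - z2)). pose proof (Rabs_pos (p1 - p2)).
  nra.
Qed.

Lemma sq_norm_lipschitz B x1 z1 p1 x2 z2 p2 :
  Rabs x1 <= B -> Rabs z1 <= B -> Rabs x2 <= B -> Rabs z2 <= B ->
  Rabs ((x2 ^ 2 + z2 ^ 2) - (x1 ^ 2 + z1 ^ 2)) <= 2 * B * dist3 (x1, z1, p1) (x2, z2, p2).
Proof.
  intros Hx1 Hz1 Hx2 Hz2. unfold dist3; cbn [coord fst snd].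
  replace ((x2 ^ 2 + z2 ^ 2) - (x1 ^ 2 + z1 ^ 2))
    with (- ((x1 + x2) * (x1 - x2)) + - ((z1 + z2) * (z1 - z2))) by ring.
  eapply Rle_trans; [apply Rabs_triang|]. rewrite !Rabs_Ropp.
  assert (Hx : Rabs (x1 + x2) <= 2 * B) by (eapply Rle_trans; [apply Rabs_triang|lra]).
  assert (Hz : Rabs (z1 + z2) <= 2 * B) by (eapply Rle_trans; [apply Rabs_triang|lra]).
  pose proof (Rabs_mult_le _ _ _ _ Hx (Rle_refl (Rabs (x1 - x2)))).
  pose proof (Rabs_mult_le _ _ _ _ Hz (Rle_refl (Rabs (z1 - z2)))).
  pose proof (Rabs_pos (p1 - p2)). assert (0 <= B) by (pose proof (Rabs_pos x2); lra). nra.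
Qed.

Lemma normal_ratio_lipschitz rho B x1 z1 p1 x2 z2 p2 : 0 < rho ->
  rho <= x1 ^ 2 + z1 ^ 2 -> rho <= x2 ^ 2 + z2 ^ 2 ->
  Rabs x1 <= B -> Rabs z1 <= B -> Rabs x2 <= B -> Rabs z2 <= B ->
  Rabs (normal_ratio x1 z1 p1 - normal_ratio x2 z2 p2)
    <= ratio_lip_const rho B * dist3 (x1, z1, p1) (x2, z2, p2).
Proof.
  intros Hr HQ1 HQ2 Hx1 Hz1 Hx2 Hz2. unfold normal_ratio, ratio_lip_const.
  pose proof (normal_numerator_lipschitz B x1 z1 p1 x2 z2 p2 Hx2 Hz2) as HN.
  pose proof (sq_norm_lipschitz B x1 z1 p1 x2 z2 p2 Hx1 Hz1 Hx2 Hz2) as HQ.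
  pose proof (Rabs_cos_sin_comb_le B x2 z2 p2 p2 Hx2 Hz2) as HN2.
  set (N1 := z1 * cos p1 - x1 * sin p1) in *. set (N2 := z2 * cos p2 - x2 * sin p2) in *.
  set (Q1 := x1 ^ 2 + z1 ^ 2) in *. set (Q2 := x2 ^ 2 + z2 ^ 2) in *.
  set (D := dist3 (x1, z1, p1) (x2, z2, p2)) in *.
  replace (N1 / Q1 - N2 / Q2) with ((N1 - N2) / Q1 + (N2 * (Q2 - Q1)) / (Q1 * Q2)) by (field; lra).
  eapply Rle_trans; [apply Rabs_triang|].
  assert (Rabs ((N1 - N2) / Q1) <= (1 + 2 * B) * D / rho) by (apply Rabs_div_le; auto).
  assert (Rabs ((N2 * (Q2 - Q1)) / (Q1 * Q2)) <= (2 * B * (2 * B * D)) / rho ^ 2).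
  { apply Rabs_div_le; [nra|simpl; nra|]. now apply Rabs_mult_le. }
  replace (((1 + 2 * B) / rho + 4 * B ^ 2 / rho ^ 2) * D)
    with ((1 + 2 * B) * D / rho + (2 * B * (2 * B * D)) / rho ^ 2) by (field; lra).
  lra.
Qed.

Definition rhs_lip_const alpha c B := alpha * ratio_lip_const (c ^ 2) B + 1 / c + 1 / c ^ 2.

Lemma rhs_lip_const_ge0 alpha c B : 0 <= alpha -> 0 < c -> 0 <= B -> 0 <= rhs_lip_const alpha c B.
Proof.
  intros. unfold rhs_lip_const, ratio_lip_const.
  assert (0 < c ^ 2) by nra.
  assert (0 <= (1 + 2 * B) / c ^ 2) by (apply Rdiv_le_0_compat; lra).
  assert (0 <= 4 * B ^ 2 / (c ^ 2) ^ 2) by (apply Rdiv_le_0_compat; nra).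
  assert (0 < 1 / c) by (apply Rdiv_lt_0_compat; lra).
  assert (0 < 1 / c ^ 2) by (apply Rdiv_lt_0_compat; lra).
  nra.
Qed.

Lemma psi_rhs_lipschitz alpha c B x1 z1 p1 x2 z2 p2 : 0 <= alpha -> 0 < c ->
  c <= x1 -> c <= x2 -> Rabs x1 <= B -> Rabs z1 <= B -> Rabs x2 <= B -> Rabs z2 <= B ->
  Rabs (psi_rhs alpha x1 z1 p1 - psi_rhs alpha x2 z2 p2)
    <= rhs_lip_const alpha c B * dist3 (x1, z1, p1) (x2, z2, p2).
Proof.
  intros Ha Hc H1 H2 Hx1 Hz1 Hx2 Hz2. rewrite !psi_rhs_normal_ratio.
  assert (HG := normal_ratio_lipschitz (c ^ 2) B x1 z1 p1 x2 z2 p2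
                  ltac:(nra) ltac:(nra) ltac:(nra) Hx1 Hz1 Hx2 Hz2).
  pose proof (dist3_coord_le 0 (x1, z1, p1) (x2, z2, p2)) as Dx.
  pose proof (dist3_coord_le 2 (x1, z1, p1) (x2, z2, p2)) as Dp.
  cbn [coord fst snd] in Dx, Dp.
  set (D := dist3 (x1, z1, p1) (x2, z2, p2)) in *.
  replace (alpha * normal_ratio x1 z1 p1 - sin p1 / x1 - (alpha * normal_ratio x2 z2 p2 - sin p2 / x2))
    with (alpha * (normal_ratio x1 z1 p1 - normal_ratio x2 z2 p2)
          + (- ((sin p1 - sin p2) / x1) + - (sin p2 * (x2 - x1) / (x1 * x2)))) by (field; lra).
  eapply Rle_trans; [apply Rabs_triang|]. eapply Rle_trans; [apply Rplus_le_compat_l, Rabs_triang|].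
  rewrite !Rabs_Ropp, Rabs_mult, (Rabs_right alpha) by lra.
  assert (Rabs ((sin p1 - sin p2) / x1) <= D / c).
  { apply Rabs_div_le; auto. eapply Rle_trans; [apply Rabs_sin_sub_le|auto]. }
  assert (Rabs (sin p2 * (x2 - x1) / (x1 * x2)) <= D / c ^ 2).
  { apply Rabs_div_le; [nra|simpl; nra|]. rewrite <- (Rmult_1_l D).
    apply Rabs_mult_le; [apply Rabs_sin_le1|]. now rewrite Rabs_minus_sym. }
  assert (alpha * Rabs (normal_ratio x1 z1 p1 - normal_ratio x2 z2 p2)
    <= alpha * (ratio_lip_const (c ^ 2) B * D)) by (apply Rmult_le_compat_l; auto).
  unfold rhs_lip_const.
  replace ((alpha * ratio_lip_const (c ^ 2) B + 1 / c + 1 / c ^ 2) * D)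
    with (alpha * (ratio_lip_const (c ^ 2) B * D) + D / c + D / c ^ 2) by (field; lra).
  lra.
Qed.

Lemma psi_rhs_bound alpha c B x z p : 0 <= alpha -> 0 < c -> c <= x -> Rabs x <= B -> Rabs z <= B ->
  Rabs (psi_rhs alpha x z p) <= alpha * (2 * B / c ^ 2) + 1 / c.
Proof.
  intros Ha Hc Hx Hxb Hz. rewrite psi_rhs_normal_ratio. unfold Rminus.
  eapply Rle_trans; [apply Rabs_triang|].
  rewrite Rabs_Ropp, Rabs_mult, (Rabs_right alpha) by lra.
  apply Rplus_le_compat.
  - apply Rmult_le_compat_l; auto. apply normal_ratio_bound; auto; nra.
  - apply Rabs_div_le; auto. apply Rabs_sin_le1.
Qed.

Lemma dist3_eq0 x1 z1 p1 x2 z2 p2 : dist3 (x1, z1, p1) (x2, z2, p2) <= 0 ->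
  x1 = x2 /\ z1 = z2 /\ p1 = p2.
Proof.
  unfold dist3; cbn [coord fst snd]. intros H.
  pose proof (Rabs_pos (x1 - x2)). pose proof (Rabs_pos (z1 - z2)). pose proof (Rabs_pos (p1 - p2)).
  assert (Hx : Rabs (x1 - x2) = 0) by lra. assert (Hz : Rabs (z1 - z2) = 0) by lra.
  assert (Hp : Rabs (p1 - p2) = 0) by lra.
  apply Rabs_eq_0 in Hx, Hz, Hp. lra.
Qed.

Lemma dist3_continuity_pt (x1 z1 p1 x2 z2 p2 : R -> R) u :
  continuity_pt x1 u -> continuity_pt z1 u -> continuity_pt p1 u ->
  continuity_pt x2 u -> continuity_pt z2 u -> continuity_pt p2 u ->
  continuity_pt (fun v => dist3 (x1 v, z1 v, p1 v) (x2 v, z2 v, p2 v)) u.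
Proof.
  intros. unfold dist3; cbn [coord fst snd].
  assert (Habs : forall f g, continuity_pt f u -> continuity_pt g u ->
    continuity_pt (fun v => Rabs (f v - g v)) u).
  { intros f g Hf Hg. apply (continuity_pt_comp (fun v => f v - g v) Rabs).
    - now apply continuity_pt_minus.
    - apply Rcontinuity_abs. }
  repeat apply continuity_pt_plus; apply Habs; auto.
Qed.

Lemma diff_increment_bound (f1 f2 g1 g2 : R -> R) s0 m K : s0 <= m -> f1 s0 = f2 s0 ->
  (forall u, s0 <= u <= m -> is_derive f1 u (g1 u)) ->
  (forall u, s0 <= u <= m -> is_derive f2 u (g2 u)) ->
  (forall u, s0 <= u <= m -> Rabs (g1 u - g2 u) <= K) ->
  Rabs (f1 m - f2 m) <= K * (m - s0).
Proof.
  intros Hm H0 H1 H2 HK.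
  replace (f1 m - f2 m) with ((f1 m - f2 m) - (f1 s0 - f2 s0)) by (rewrite H0; ring).
  apply (increment_bound (fun v => f1 v - f2 v) (fun v => g1 v - g2 v)); auto.
  intros u Hu. apply (is_derive_minus f1 f2); auto.
Qed.

Definition regular_at alpha (x z psi : R -> R) u :=
  is_derive x u (cos (psi u)) /\ is_derive z u (sin (psi u)) /\
  is_derive psi u (psi_rhs alpha (x u) (z u) (psi u)).

Definition solves_on alpha s0 s1 (x z psi : R -> R) :=
  forall u, s0 <= u <= s1 -> regular_at alpha x z psi u.

Definition confined c B s0 s1 (x z : R -> R) :=
  forall u, s0 <= u <= s1 -> c <= x u /\ Rabs (x u) <= B /\ Rabs (z u) <= B.

Section RegularUniqueness.
Variables (alpha c B : R) (x1 z1 p1 x2 z2 p2 : R -> R).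
Hypotheses (alpha_ge0 : 0 <= alpha) (c_pos : 0 < c) (B_ge0 : 0 <= B).

Let D v := dist3 (x1 v, z1 v, p1 v) (x2 v, z2 v, p2 v).

Lemma regular_uniqueness_short s0 s1 : s0 <= s1 ->
  solves_on alpha s0 s1 x1 z1 p1 -> solves_on alpha s0 s1 x2 z2 p2 ->
  confined c B s0 s1 x1 z1 -> confined c B s0 s1 x2 z2 ->
  x1 s0 = x2 s0 -> z1 s0 = z2 s0 -> p1 s0 = p2 s0 ->
  (2 + rhs_lip_const alpha c B) * (s1 - s0) < 1 ->
  forall u, s0 <= u <= s1 -> x1 u = x2 u /\ z1 u = z2 u /\ p1 u = p2 u.
Proof.
  intros Hs S1 S2 C1 C2 E1 E2 E3 Hsmall u Hu. apply dist3_eq0. fold (D u).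
  pose proof (rhs_lip_const_ge0 alpha c B alpha_ge0 c_pos B_ge0) as HL.
  enough (D u = 0) by lra.
  apply (self_bounded_vanishes D s0 s1 (2 + rhs_lip_const alpha c B)); auto; try lra.
  - intros v Hv. destruct (S1 v Hv) as (A1 & A2 & A3), (S2 v Hv) as (B1 & B2 & B3).
    apply dist3_continuity_pt; eapply is_derive_continuity_pt; eauto.
  - intros v. apply dist3_ge0.
  - intros m Hm Hmax.
    assert (Hp : forall v, s0 <= v <= m -> Rabs (p1 v - p2 v) <= D m).
    { intros v Hv. eapply Rle_trans; [|apply Hmax, Hv].
      apply (dist3_coord_le 2 (x1 v, z1 v, p1 v) (x2 v, z2 v, p2 v)). }
    assert (Hx : Rabs (x1 m - x2 m) <= D m * (m - s0)).
    { apply (diff_increment_bound x1 x2 (fun v => cos (p1 v)) (fun v => cos (p2 v))); auto; try lra.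
      1, 2: intros v Hv; [apply S1 + apply S2]; lra.
      intros v Hv. eapply Rle_trans; [apply Rabs_cos_sub_le|apply Hp, Hv]. }
    assert (Hz : Rabs (z1 m - z2 m) <= D m * (m - s0)).
    { apply (diff_increment_bound z1 z2 (fun v => sin (p1 v)) (fun v => sin (p2 v))); auto; try lra.
      1, 2: intros v Hv; [apply S1 + apply S2]; lra.
      intros v Hv. eapply Rle_trans; [apply Rabs_sin_sub_le|apply Hp, Hv]. }
    assert (Hpm : Rabs (p1 m - p2 m) <= rhs_lip_const alpha c B * D m * (m - s0)).
    { apply (diff_increment_bound p1 p2 (fun v => psi_rhs alpha (x1 v) (z1 v) (p1 v))
               (fun v => psi_rhs alpha (x2 v) (z2 v) (p2 v))); auto; try lra.
      1, 2: intros v Hv; [apply S1 + apply S2]; lra.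
      intros v Hv. destruct (C1 v ltac:(lra)) as (F1 & F2 & F3), (C2 v ltac:(lra)) as (G1 & G2 & G3).
      eapply Rle_trans; [apply (psi_rhs_lipschitz alpha c B); auto|].
      apply Rmult_le_compat_l; [auto|apply Hmax, Hv]. }
    unfold D at 1, dist3; cbn [coord fst snd]. lra.
Qed.

Lemma regular_uniqueness s0 s1 : s0 <= s1 ->
  solves_on alpha s0 s1 x1 z1 p1 -> solves_on alpha s0 s1 x2 z2 p2 ->
  confined c B s0 s1 x1 z1 -> confined c B s0 s1 x2 z2 ->
  x1 s0 = x2 s0 -> z1 s0 = z2 s0 -> p1 s0 = p2 s0 ->
  forall u, s0 <= u <= s1 -> x1 u = x2 u /\ z1 u = z2 u /\ p1 u = p2 u.
Proof.
  intros Hs S1 S2 C1 C2 E1 E2 E3.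
  set (K := 2 + rhs_lip_const alpha c B).
  assert (HK : 2 <= K)
    by (pose proof (rhs_lip_const_ge0 alpha c B alpha_ge0 c_pos B_ge0); unfold K; lra).
  apply (interval_induction _ s0 s1 (1 / (2 * K))); [apply Rdiv_lt_0_compat; lra|auto|].
  intros t u Htu Hu Hdel Hbefore.
  destruct (Hbefore t ltac:(lra)) as (F1 & F2 & F3).
  apply (regular_uniqueness_short t u); auto; try lra;
    try (intros v Hv; first [apply S1|apply S2|apply C1|apply C2]; lra).
  assert (K * (u - t) <= K * (1 / (2 * K))) by (apply Rmult_le_compat_l; lra).
  replace (K * (1 / (2 * K))) with (1 / 2) in * by (field; lra). fold K. lra.
Qed.

End RegularUniqueness.

Lemma sol_near_origin {alpha a b x z psi} (sol : is_solution alpha a b x z psi) :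
  exists r, 0 < r /\ forall s, 0 <= s <= r -> in_oint a b s /\ Rabs (psi s) <= 1 / 2.
Proof.
  destruct (sol_in_oint0 sol) as [Ha Hb]. destruct (sol_init sol) as (_ & _ & Hp0).
  destruct (continuity_pt_ball psi 0 (sol_continuity_psi sol 0 (sol_in_oint0 sol)) (1 / 2))
    as [d [Hd Hball]]; [lra|].
  assert (Hr : exists r, 0 < r /\ forall s, 0 <= s <= r -> Rbar_lt s b).
  { destruct b as [r| |]; simpl in *; [exists (r / 2)|exists 1|contradiction];
      split; auto; intros; lra. }
  destruct Hr as [r [Hr Hrb]].
  exists (Rmin r (d / 2)). split; [apply Rmin_glb_lt; lra|].
  intros s Hs. pose proof (Rmin_l r (d / 2)). pose proof (Rmin_r r (d / 2)). split.
  - split; [destruct a; simpl in *; auto; lra|apply Hrb; lra].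
  - specialize (Hball s ltac:(rewrite Rminus_0_r, Rabs_right; lra)).
    rewrite Hp0, Rminus_0_r in Hball. lra.
Qed.

Lemma near_origin_bounds {alpha a b x z psi} (sol : is_solution alpha a b x z psi) h :
  (forall s, 0 <= s <= h -> in_oint a b s) -> (forall u, 0 <= u <= h -> Rabs (psi u) <= 1 / 2) ->
  forall u, 0 <= u <= h -> u / 2 <= x u /\ Rabs (x u) <= u /\ Rabs (z u - 1) <= u.
Proof.
  intros Hin Hp u Hu. destruct (sol_init sol) as (Hx0 & _).
  split; [|apply (sol_growth sol); [lra|apply Hin, Hu]].
  destruct (mean_value x (fun v => cos (psi v)) 0 u) as [c [Hc Heq]]; [lra| |].
  - intros v Hv. apply (sol_derive_x sol), Hin. lra.
  - pose proof (cos_ge_half _ (Hp c ltac:(lra))). rewrite Hx0 in Heq. nra.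
Qed.

(* The singular term [- sin psi / x] cancels in the derivative of [x sin psi]. *)
Lemma derive_x_sin_psi {alpha a b x z psi} (sol : is_solution alpha a b x z psi) u :
  in_oint a b u -> is_derive (fun v => x v * sin (psi v)) u
    (alpha * x u * cos (psi u) * normal_ratio (x u) (z u) (psi u)).
Proof.
  intros Hin. destruct (sol_init sol) as (Hx0 & _ & Hp0).
  destruct (sol_ex_derive_psi sol u Hin) as [dp Hdp].
  assert (Hs : is_derive (fun v => sin (psi v)) u (dp * cos (psi u))).
  { apply (is_derive_comp sin psi u (cos (psi u)) dp); auto. auto_derive; auto; ring. }
  pose proof (is_derive_mult x (fun v => sin (psi v)) u _ _ (sol_derive_x sol u Hin) Hs
                (fun n m => Rmult_comm n m)) as Hm.
  replace (alpha * x u * cos (psi u) * normal_ratio (x u) (z u) (psi u))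
    with (plus (mult (cos (psi u)) (sin (psi u))) (mult (x u) (dp * cos (psi u)))); [exact Hm|].
  unfold plus, mult; simpl.
  destruct (Req_dec u 0) as [->|Hne].
  - rewrite Hx0, Hp0, sin_0. ring.
  - pose proof (sol_x_neq0 sol u Hin Hne) as Hx.
    assert (Hdp' : dp = psi_rhs alpha (x u) (z u) (psi u)).
    { rewrite <- (is_derive_unique _ _ _ Hdp). apply is_derive_unique, (sol_derive_psi sol u Hin Hne). }
    rewrite Hdp', psi_rhs_normal_ratio. field. exact Hx.
Qed.

Section SingularUniqueness.
Context {alpha : R} {a1 b1 a2 b2 : Rbar} {x1 z1 p1 x2 z2 p2 : R -> R}
  (S1 : is_solution alpha a1 b1 x1 z1 p1) (S2 : is_solution alpha a2 b2 x2 z2 p2).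
Hypothesis alpha_ge0 : 0 <= alpha.
Variable h : R.
Hypotheses (h_pos : 0 < h) (h_le : h <= 1 / 2)
  (in1 : forall s, 0 <= s <= h -> in_oint a1 b1 s) (in2 : forall s, 0 <= s <= h -> in_oint a2 b2 s)
  (psi1_small : forall s, 0 <= s <= h -> Rabs (p1 s) <= 1 / 2)
  (psi2_small : forall s, 0 <= s <= h -> Rabs (p2 s) <= 1 / 2).

Let D v := dist3 (x1 v, z1 v, p1 v) (x2 v, z2 v, p2 v).
Let G1 v := normal_ratio (x1 v) (z1 v) (p1 v).
Let G2 v := normal_ratio (x2 v) (z2 v) (p2 v).

Lemma near_origin_normal_ratio v : 0 <= v <= h ->
  Rabs (G1 v) <= 12 /\ Rabs (G2 v) <= 12 /\ Rabs (G1 v - G2 v) <= 160 * D v.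
Proof.
  intros Hv.
  destruct (near_origin_bounds S1 h in1 psi1_small v Hv) as (A1 & A2 & A3).
  destruct (near_origin_bounds S2 h in2 psi2_small v Hv) as (B1 & B2 & B3).
  apply Rabs_le_between in A3, B3.
  assert (Q1 : 1 / 4 <= x1 v ^ 2 + z1 v ^ 2) by nra.
  assert (Q2 : 1 / 4 <= x2 v ^ 2 + z2 v ^ 2) by nra.
  assert (Z1 : Rabs (z1 v) <= 3 / 2) by (apply Rabs_le; lra).
  assert (Z2 : Rabs (z2 v) <= 3 / 2) by (apply Rabs_le; lra).
  replace 12 with (2 * (3 / 2) / (1 / 4)) by field.
  replace 160 with (ratio_lip_const (1 / 4) (3 / 2)) by (unfold ratio_lip_const; field).
  split; [|split]; [apply normal_ratio_bound|apply normal_ratio_bound|apply normal_ratio_lipschitz];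
    auto; lra.
Qed.

Section AtMaximum.
Variable m : R.
Hypotheses (m_pos : 0 < m) (m_le : m <= h) (m_max : forall v, 0 <= v <= m -> D v <= D m).

Lemma psi_gap_le v : 0 <= v <= m -> Rabs (p1 v - p2 v) <= D m.
Proof.
  intros Hv. eapply Rle_trans; [|apply m_max, Hv].
  apply (dist3_coord_le 2 (x1 v, z1 v, p1 v) (x2 v, z2 v, p2 v)).
Qed.

Lemma x_gap_le v : 0 <= v <= m -> Rabs (x1 v - x2 v) <= D m * v.
Proof.
  intros Hv. replace (D m * v) with (D m * (v - 0)) by ring.
  apply (diff_increment_bound x1 x2 (fun u => cos (p1 u)) (fun u => cos (p2 u))); try lra.
  - destruct (sol_init S1) as [-> _], (sol_init S2) as [-> _]. auto.
  - intros u Hu. apply (sol_derive_x S1), in1. lra.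
  - intros u Hu. apply (sol_derive_x S2), in2. lra.
  - intros u Hu. eapply Rle_trans; [apply Rabs_cos_sub_le|apply psi_gap_le; lra].
Qed.

Lemma z_gap_le : Rabs (z1 m - z2 m) <= D m * m.
Proof.
  replace (D m * m) with (D m * (m - 0)) by ring.
  apply (diff_increment_bound z1 z2 (fun u => sin (p1 u)) (fun u => sin (p2 u))); try lra.
  - destruct (sol_init S1) as (_ & -> & _), (sol_init S2) as (_ & -> & _). auto.
  - intros u Hu. apply (sol_derive_z S1), in1. lra.
  - intros u Hu. apply (sol_derive_z S2), in2. lra.
  - intros u Hu. eapply Rle_trans; [apply Rabs_sin_sub_le|apply psi_gap_le; lra].
Qed.

Lemma moment_gap_le :
  Rabs (x1 m * sin (p1 m) - x2 m * sin (p2 m)) <= 184 * alpha * m * D m * m.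
Proof.
  replace (184 * alpha * m * D m * m) with (184 * alpha * m * D m * (m - 0)) by ring.
  apply (diff_increment_bound (fun v => x1 v * sin (p1 v)) (fun v => x2 v * sin (p2 v))
    (fun v => alpha * x1 v * cos (p1 v) * G1 v) (fun v => alpha * x2 v * cos (p2 v) * G2 v));
    try lra.
  - cbv beta. destruct (sol_init S1) as [-> _], (sol_init S2) as [-> _]. ring.
  - intros u Hu. apply (derive_x_sin_psi S1), in1. lra.
  - intros u Hu. apply (derive_x_sin_psi S2), in2. lra.
  - intros v Hv. destruct (near_origin_normal_ratio v ltac:(lra)) as (HG1 & _ & HG).
    destruct (near_origin_bounds S2 h in2 psi2_small v ltac:(lra)) as (_ & X2 & _).
    replace (alpha * x1 v * cos (p1 v) * G1 v - alpha * x2 v * cos (p2 v) * G2 v)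
      with (alpha * ((x1 v - x2 v) * cos (p1 v) * G1 v + x2 v * (cos (p1 v) - cos (p2 v)) * G1 v
                     + x2 v * cos (p2 v) * (G1 v - G2 v))) by ring.
    rewrite Rabs_mult, (Rabs_right alpha) by lra.
    replace (184 * alpha * m * D m) with (alpha * (184 * m * D m)) by ring.
    apply Rmult_le_compat_l; [lra|].
    assert (Hcc : Rabs (cos (p1 v) - cos (p2 v)) <= D m).
    { eapply Rle_trans; [apply Rabs_cos_sub_le|apply psi_gap_le, Hv]. }
    pose proof (Rabs_mult_le _ _ _ _ (Rabs_mult_le _ _ _ _ (x_gap_le v Hv) (Rabs_cos_le1 (p1 v))) HG1).
    pose proof (Rabs_mult_le _ _ _ _ (Rabs_mult_le _ _ _ _ X2 Hcc) HG1).
    pose proof (Rabs_mult_le _ _ _ _ (Rabs_mult_le _ _ _ _ X2 (Rabs_cos_le1 (p2 v))) HG).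
    pose proof (Rabs_triang ((x1 v - x2 v) * cos (p1 v) * G1 v + x2 v * (cos (p1 v) - cos (p2 v)) * G1 v)
                  (x2 v * cos (p2 v) * (G1 v - G2 v))).
    pose proof (Rabs_triang ((x1 v - x2 v) * cos (p1 v) * G1 v) (x2 v * (cos (p1 v) - cos (p2 v)) * G1 v)).
    pose proof (m_max v Hv). pose proof (dist3_ge0 (x1 v, z1 v, p1 v) (x2 v, z2 v, p2 v)).
    assert (D m * v <= D m * m) by (apply Rmult_le_compat_l; [apply dist3_ge0|lra]).
    fold (D v) in *. nra.
Qed.

Lemma moment_le : Rabs (x2 m * sin (p2 m)) <= 12 * alpha * m * m.
Proof.
  replace (x2 m * sin (p2 m)) with (x2 m * sin (p2 m) - x2 0 * sin (p2 0))
    by (destruct (sol_init S2) as [-> _]; ring).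
  replace (12 * alpha * m * m) with (12 * alpha * m * (m - 0)) by ring.
  apply (increment_bound (fun v => x2 v * sin (p2 v)) (fun v => alpha * x2 v * cos (p2 v) * G2 v));
    try lra.
  - intros u Hu. apply (derive_x_sin_psi S2), in2. lra.
  - intros u Hu. destruct (near_origin_normal_ratio u ltac:(lra)) as (_ & HG2 & _).
    destruct (near_origin_bounds S2 h in2 psi2_small u ltac:(lra)) as (_ & X2 & _).
    assert (Hx : Rabs (alpha * x2 u) <= alpha * m).
    { rewrite Rabs_mult, (Rabs_right alpha) by lra. apply Rmult_le_compat_l; lra. }
    pose proof (Rabs_mult_le _ _ _ _ (Rabs_mult_le _ _ _ _ Hx (Rabs_cos_le1 (p2 u))) HG2). lra.
Qed.

(* [sin p1 - sin p2] is recovered from the moments [x sin psi] through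
   [x1 m, x2 m >= m / 2], and [psi] from [sin psi] since [|psi| <= 1/2]. *)
Lemma singular_self_bound : D m <= (2 + 832 * alpha) * m * D m.
Proof.
  destruct (near_origin_bounds S1 h in1 psi1_small m ltac:(lra)) as (X1 & _).
  destruct (near_origin_bounds S2 h in2 psi2_small m ltac:(lra)) as (X2 & _).
  pose proof moment_gap_le as Hw. pose proof moment_le as Hw2.
  assert (Hsin : Rabs (sin (p1 m) - sin (p2 m)) <= 416 * alpha * m * D m).
  { replace (sin (p1 m) - sin (p2 m)) with ((x1 m * sin (p1 m) - x2 m * sin (p2 m)) / x1 m
      + (x2 m * sin (p2 m)) * (x2 m - x1 m) / (x1 m * x2 m)) by (field; lra).
    eapply Rle_trans; [apply Rabs_triang|].
    assert (T1 : Rabs ((x1 m * sin (p1 m) - x2 m * sin (p2 m)) / x1 m)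
                 <= 184 * alpha * m * D m * m / (m / 2)) by (apply Rabs_div_le; auto; lra).
    assert (T2 : Rabs ((x2 m * sin (p2 m)) * (x2 m - x1 m) / (x1 m * x2 m))
                 <= 12 * alpha * m * m * (D m * m) / (m * m / 4)).
    { apply Rabs_div_le; [nra|nra|]. apply Rabs_mult_le; auto.
      rewrite Rabs_minus_sym. apply x_gap_le. lra. }
    replace (184 * alpha * m * D m * m / (m / 2)) with (368 * alpha * m * D m) in T1 by (field; lra).
    replace (12 * alpha * m * m * (D m * m) / (m * m / 4)) with (48 * alpha * m * D m) in T2
      by (field; lra).
    lra. }
  assert (Hp : Rabs (p1 m - p2 m) <= 832 * alpha * m * D m).
  { eapply Rle_trans; [apply Rabs_sub_le_sin; [apply psi1_small|apply psi2_small]; lra|lra]. }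
  pose proof (x_gap_le m ltac:(lra)). pose proof z_gap_le.
  unfold D at 1, dist3; cbn [coord fst snd]. lra.
Qed.

End AtMaximum.
End SingularUniqueness.

Lemma singular_uniqueness alpha a1 b1 x1 z1 p1 a2 b2 x2 z2 p2 : 0 <= alpha ->
  is_solution alpha a1 b1 x1 z1 p1 -> is_solution alpha a2 b2 x2 z2 p2 ->
  exists h, 0 < h /\ (forall s, 0 <= s <= h -> in_oint a1 b1 s /\ in_oint a2 b2 s) /\
    forall u, 0 <= u <= h -> x1 u = x2 u /\ z1 u = z2 u /\ p1 u = p2 u.
Proof.
  intros Hal S1 S2.
  destruct (sol_near_origin S1) as [r1 [Hr1 N1]], (sol_near_origin S2) as [r2 [Hr2 N2]].
  set (C := 2 + 832 * alpha).
  set (h := Rmin (Rmin r1 r2) (1 / (2 * C))).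
  assert (HC : 2 <= C) by (unfold C; lra).
  assert (Hh : 0 < h) by (apply Rmin_glb_lt; [apply Rmin_glb_lt|apply Rdiv_lt_0_compat]; lra).
  assert (HCh : C * h <= 1 / 2).
  { replace (1 / 2) with (C * (1 / (2 * C))) by (field; lra).
    apply Rmult_le_compat_l; [lra|apply Rmin_r]. }
  assert (H1 : h <= r1 /\ h <= r2).
  { assert (h <= Rmin r1 r2) by apply Rmin_l.
    pose proof (Rmin_l r1 r2). pose proof (Rmin_r r1 r2). lra. }
  destruct H1 as [H1 H2].
  assert (Hh2 : h <= 1 / 2) by nra.
  exists h. split; [auto|]. split; [intros s Hs; split; [apply N1|apply N2]; lra|].
  intros u Hu. apply dist3_eq0.
  enough (dist3 (x1 u, z1 u, p1 u) (x2 u, z2 u, p2 u) = 0) by lra.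
  assert (C * (h - 0) < 1) by (rewrite Rminus_0_r; lra).
  apply (self_bounded_vanishes (fun v => dist3 (x1 v, z1 v, p1 v) (x2 v, z2 v, p2 v)) 0 h C);
    auto; try lra.
  - intros v Hv. destruct (N1 v ltac:(lra)) as [I1 _], (N2 v ltac:(lra)) as [I2 _].
    apply dist3_continuity_pt;
      [eapply is_derive_continuity_pt, (sol_derive_x S1 v I1)
      |eapply is_derive_continuity_pt, (sol_derive_z S1 v I1)
      |apply (sol_continuity_psi S1 v I1)
      |eapply is_derive_continuity_pt, (sol_derive_x S2 v I2)
      |eapply is_derive_continuity_pt, (sol_derive_z S2 v I2)
      |apply (sol_continuity_psi S2 v I2)].
  - intros v. apply dist3_ge0.
  - intros m Hm Hmax. rewrite Rminus_0_r.
    destruct (Req_dec m 0) as [->|Hm0].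
    + destruct (sol_init S1) as (-> & -> & ->), (sol_init S2) as (-> & -> & ->).
      unfold dist3; cbn [coord fst snd]. rewrite !Rminus_diag, Rabs_R0. lra.
    + apply (singular_self_bound S1 S2 Hal h); try lra;
        intros s Hs; solve [apply N1; lra|apply N2; lra|apply Hmax; lra].
Qed.

Lemma sol_solves_on {alpha a b x z psi} (sol : is_solution alpha a b x z psi) s0 s1 :
  0 < s0 -> in_oint a b s1 -> solves_on alpha s0 s1 x z psi.
Proof.
  intros Hs0 Hs1 u Hu. assert (Hin : in_oint a b u) by (apply (sol_in_oint_between sol s1); auto; lra).
  split; [|split]; [apply (sol_derive_x sol)|apply (sol_derive_z sol)|apply (sol_derive_psi sol)];
    auto; lra.
Qed.

Lemma sol_confined {alpha a b x z psi} (sol : is_solution alpha a b x z psi) s0 s1 :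
  0 <= alpha -> 0 <= s0 <= s1 -> in_oint a b s1 -> confined (x s0) (1 + s1) s0 s1 x z.
Proof.
  intros Hal Hs Hs1 u Hu.
  assert (Hin : forall v, 0 <= v <= s1 -> in_oint a b v)
    by (intros; now apply (sol_in_oint_between sol s1)).
  destruct (sol_growth sol u ltac:(lra) (Hin u ltac:(lra))) as [Hx Hz].
  apply Rabs_le_between in Hz.
  split; [|split; [lra|apply Rabs_le; lra]].
  destruct (Req_dec s0 u) as [->|]; [lra|].
  left. apply (x_strictly_increasing sol Hal); try apply Hin; lra.
Qed.

Lemma forward_uniqueness alpha a1 b1 x1 z1 p1 a2 b2 x2 z2 p2 : 0 <= alpha ->
  is_solution alpha a1 b1 x1 z1 p1 -> is_solution alpha a2 b2 x2 z2 p2 ->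
  forall s, 0 <= s -> in_oint a1 b1 s -> in_oint a2 b2 s ->
  x1 s = x2 s /\ z1 s = z2 s /\ p1 s = p2 s.
Proof.
  intros Hal S1 S2 s Hs Hi1 Hi2.
  destruct (singular_uniqueness alpha a1 b1 x1 z1 p1 a2 b2 x2 z2 p2 Hal S1 S2)
    as (h & Hh & Hin & Hagree).
  destruct (Rle_or_lt s h) as [|Hsh]; [apply Hagree; lra|].
  destruct (Hagree h ltac:(lra)) as (E1 & E2 & E3).
  assert (Hc : 0 < x1 h) by (apply (x_pos S1 Hal); [apply Hin|]; lra).
  apply (regular_uniqueness alpha (x1 h) (1 + s) x1 z1 p1 x2 z2 p2 Hal Hc ltac:(lra) h s);
    auto; try lra.
  - now apply (sol_solves_on S1).
  - now apply (sol_solves_on S2).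
  - apply (sol_confined S1); auto; lra.
  - rewrite E1. apply (sol_confined S2); auto; lra.
Qed.

Lemma uniqueness alpha a1 b1 x1 z1 p1 a2 b2 x2 z2 p2 : 0 <= alpha ->
  is_solution alpha a1 b1 x1 z1 p1 -> is_solution alpha a2 b2 x2 z2 p2 ->
  forall s, in_oint a1 b1 s -> in_oint a2 b2 s -> x1 s = x2 s /\ z1 s = z2 s /\ p1 s = p2 s.
Proof.
  intros Hal S1 S2 s Hi1 Hi2. destruct (Rle_or_lt 0 s).
  - now apply (forward_uniqueness alpha a1 b1 x1 z1 p1 a2 b2 x2 z2 p2).
  - rewrite <- (Ropp_involutive s) in Hi1, Hi2. apply in_oint_opp in Hi1, Hi2.
    destruct (forward_uniqueness _ _ _ _ _ _ _ _ _ _ _ Hal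
      (reflect_solution _ _ _ _ _ _ S1) (reflect_solution _ _ _ _ _ _ S2) (- s) ltac:(lra) Hi1 Hi2)
      as (A1 & A2 & A3).
    rewrite Ropp_involutive in A1, A2, A3. lra.
Qed.

(** * Picard iteration *)

Definition clamp lo hi t := Rmax lo (Rmin hi t).

Lemma clamp_in lo hi t : lo <= hi -> lo <= clamp lo hi t <= hi.
Proof. intros. unfold clamp, Rmax, Rmin. repeat destruct Rle_dec; lra. Qed.

Lemma clamp_id lo hi t : lo <= t <= hi -> clamp lo hi t = t.
Proof. intros. unfold clamp, Rmax, Rmin. repeat destruct Rle_dec; lra. Qed.

Lemma clamp_lipschitz lo hi t t' : lo <= hi -> Rabs (clamp lo hi t - clamp lo hi t') <= Rabs (t - t').
Proof.
  intros. unfold clamp, Rmax, Rmin.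
  destruct (Rle_or_lt t' t); [rewrite (Rabs_right (t - t'))|rewrite (Rabs_left (t - t'))]; try lra;
    repeat destruct Rle_dec; apply Rabs_le; lra.
Qed.

Lemma lipschitz_continuous (g : R -> R) K :
  (forall t t', Rabs (g t - g t') <= K * Rabs (t - t')) -> forall t, continuous g t.
Proof.
  intros H t. apply continuity_pt_filterlim. intros eps Heps.
  assert (HK : 0 <= K).
  { specialize (H 1 0). pose proof (Rabs_pos (g 1 - g 0)). rewrite Rminus_0_r, Rabs_R1 in H. lra. }
  exists (eps / (K + 1)). split; [apply Rdiv_lt_0_compat; lra|].
  intros u [_ Hu]. simpl in *. unfold R_dist in *.
  eapply Rle_lt_trans; [apply H|].
  apply Rle_lt_trans with ((K + 1) * Rabs (u - t)); [pose proof (Rabs_pos (u - t)); nra|].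
  replace eps with ((K + 1) * (eps / (K + 1))) by (field; lra).
  apply Rmult_lt_compat_l; lra.
Qed.

Lemma ex_RInt_of_continuous (g : R -> R) a b : (forall u, continuous g u) -> ex_RInt g a b.
Proof. intros Hc. apply (ex_RInt_continuous (V := R_CompleteNormedModule)). auto. Qed.

Lemma abs_RInt_le (g : R -> R) K a b : (forall u, continuous g u) ->
  (forall u, Rmin a b <= u <= Rmax a b -> Rabs (g u) <= K) -> Rabs (RInt g a b) <= K * Rabs (b - a).
Proof.
  intros Hc Hb. destruct (Rle_or_lt a b).
  - rewrite Rmin_left, Rmax_right in Hb by lra. rewrite (Rabs_right (b - a)), Rmult_comm by lra.
    apply abs_RInt_le_const; auto. now apply ex_RInt_of_continuous.
  - rewrite Rmin_right, Rmax_left in Hb by lra. rewrite (Rabs_left (b - a)) by lra.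
    rewrite <- opp_RInt_swap by now apply ex_RInt_of_continuous.
    change (opp (RInt g b a)) with (- RInt g b a). rewrite Rabs_Ropp.
    replace (K * - (b - a)) with ((a - b) * K) by ring.
    apply abs_RInt_le_const; auto; [lra|]. now apply ex_RInt_of_continuous.
Qed.

Lemma RInt_sub_upper (g : R -> R) a t t' : (forall u, continuous g u) ->
  RInt g a t - RInt g a t' = RInt g t' t.
Proof.
  intros Hc. rewrite <- (RInt_Chasles g a t' t) by now apply ex_RInt_of_continuous.
  change (plus (RInt g a t') (RInt g t' t)) with (RInt g a t' + RInt g t' t). ring.
Qed.

Lemma RInt_sub_integrand (f g : R -> R) a b : (forall u, continuous f u) -> (forall u, continuous g u) ->
  RInt f a b - RInt g a b = RInt (fun u => f u - g u) a b.
Proof. intros. symmetry. apply (RInt_minus f g); now apply ex_RInt_of_continuous. Qed.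

Lemma pow_half_bounds k : 0 <= (1 / 2) ^ k <= 1.
Proof. induction k; simpl; lra. Qed.

Lemma pow_half_antimono N n : (N <= n)%nat -> (1 / 2) ^ n <= (1 / 2) ^ N.
Proof.
  intros H. replace n with (N + (n - N))%nat by lia. rewrite pow_add.
  pose proof (pow_half_bounds N). pose proof (pow_half_bounds (n - N)). nra.
Qed.

Lemma pow_half_small eps K : 0 < eps -> 0 <= K -> exists N, K * (1 / 2) ^ N < eps.
Proof.
  intros He HK.
  destruct (pow_lt_1_zero (1 / 2) ltac:(rewrite Rabs_right; lra) (eps / (K + 1))
              ltac:(apply Rdiv_lt_0_compat; lra)) as [N HN].
  exists N. specialize (HN N (le_n N)). rewrite Rabs_right in HN by (apply Rle_ge, pow_le; lra).
  pose proof (pow_half_bounds N).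
  apply Rmult_lt_compat_l with (r := K + 1) in HN; [|lra].
  replace ((K + 1) * (eps / (K + 1))) with eps in HN by (field; lra). nra.
Qed.

Lemma le0_of_le_geometric a K : 0 <= K -> (forall n, a <= K * (1 / 2) ^ n) -> a <= 0.
Proof.
  intros HK H. destruct (Rle_or_lt a 0) as [|Ha]; auto.
  destruct (pow_half_small a K Ha HK) as [N HN]. specialize (H N). lra.
Qed.

Lemma lim_dist_le (u : nat -> R) (l w K : R) :
  is_lim_seq u l -> (forall n, Rabs (u n - w) <= K) -> Rabs (l - w) <= K.
Proof.
  intros Hu H.
  assert (Hl : is_lim_seq (fun n => Rabs (u n - w)) (Rabs (l - w))).
  { apply (is_lim_seq_abs _ (Finite (l - w))), is_lim_seq_minus'; auto. apply is_lim_seq_const. }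
  exact (is_lim_seq_le _ _ _ _ H Hl (is_lim_seq_const K)).
Qed.

Lemma dist3_le_coords p q K : (forall i, (i < 3)%nat -> Rabs (coord i p - coord i q) <= K) ->
  dist3 p q <= 3 * K.
Proof.
  intros H. unfold dist3.
  pose proof (H 0%nat ltac:(lia)). pose proof (H 1%nat ltac:(lia)). pose proof (H 2%nat ltac:(lia)). lra.
Qed.

Lemma dist3_triangle p q r : dist3 p r <= dist3 p q + dist3 q r.
Proof.
  unfold dist3.
  assert (Htri : forall u v w, Rabs (u - w) <= Rabs (u - v) + Rabs (v - w)).
  { intros. replace (u - w) with ((u - v) + (v - w)) by ring. apply Rabs_triang. }
  pose proof (Htri (coord 0 p) (coord 0 q) (coord 0 r)).
  pose proof (Htri (coord 1 p) (coord 1 q) (coord 1 r)).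
  pose proof (Htri (coord 2 p) (coord 2 q) (coord 2 r)). lra.
Qed.

Section Picard.
Variables (f : nat -> R * R * R -> R) (L M h t0 : R) (y : R * R * R).
Hypotheses (f_lip : forall i p q, (i < 3)%nat -> Rabs (f i p - f i q) <= L * dist3 p q)
  (f_bound : forall i p, (i < 3)%nat -> Rabs (f i p) <= M)
  (L_ge0 : 0 <= L) (M_ge0 : 0 <= M) (h_pos : 0 < h) (h_small : 3 * h * L <= 1 / 2).

Fixpoint picard_iter (n : nat) : R -> R * R * R :=
  match n with
  | O => fun _ => y
  | S n => fun t => (coord 0 y + RInt (fun u => f 0%nat (picard_iter n u)) t0 t,
                     coord 1 y + RInt (fun u => f 1%nat (picard_iter n u)) t0 t,
                     coord 2 y + RInt (fun u => f 2%nat (picard_iter n u)) t0 t)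
  end.

Lemma picard_iter_S n i t : (i < 3)%nat ->
  coord i (picard_iter (S n) t) = coord i y + RInt (fun u => f i (picard_iter n u)) t0 t.
Proof. intros Hi. destruct i as [|[|[|i]]]; [reflexivity..|lia]. Qed.

Lemma comp_continuous (g : R -> R * R * R) K :
  (forall i t t', (i < 3)%nat -> Rabs (coord i (g t) - coord i (g t')) <= K * Rabs (t - t')) ->
  forall i u, (i < 3)%nat -> continuous (fun u => f i (g u)) u.
Proof.
  intros Hg i u Hi. apply (lipschitz_continuous _ (L * (3 * K))). intros t t'.
  eapply Rle_trans; [apply f_lip, Hi|].
  replace (L * (3 * K) * Rabs (t - t')) with (L * (3 * (K * Rabs (t - t')))) by ring.
  apply Rmult_le_compat_l; auto. apply dist3_le_coords. auto.
Qed.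

Lemma picard_iter_lipschitz n i t t' : (i < 3)%nat ->
  Rabs (coord i (picard_iter n t) - coord i (picard_iter n t')) <= M * Rabs (t - t').
Proof.
  revert i t t'. induction n as [|n IH]; intros i t t' Hi.
  - simpl. rewrite Rminus_diag, Rabs_R0. pose proof (Rabs_pos (t - t')). nra.
  - rewrite !picard_iter_S by auto.
    rewrite Rminus_plus_l_l.
    pose proof (comp_continuous _ _ IH i) as Hc.
    rewrite RInt_sub_upper by auto.
    apply abs_RInt_le; auto.
Qed.

Lemma picard_iter_continuous n i u : (i < 3)%nat -> continuous (fun u => f i (picard_iter n u)) u.
Proof. apply (comp_continuous _ M), picard_iter_lipschitz. Qed.

Lemma within_of_between t u : Rmin t0 t <= u <= Rmax t0 t -> Rabs (t - t0) <= h -> Rabs (u - t0) <= h.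
Proof.
  intros Hu Ht. rewrite Rmin_comm, Rmax_comm in Hu.
  eapply Rle_trans; [apply Rabs_le_between_min_max, Hu|exact Ht].
Qed.

Lemma picard_iter_step n t : Rabs (t - t0) <= h ->
  dist3 (picard_iter (S n) t) (picard_iter n t) <= 3 * (M * h * (1 / 2) ^ n).
Proof.
  revert t. induction n as [|n IH]; intros t Ht; apply dist3_le_coords; intros i Hi.
  - rewrite picard_iter_S by auto. simpl (picard_iter 0 t).
    rewrite Rplus_minus_l.
    eapply Rle_trans; [apply abs_RInt_le; [intros; apply (picard_iter_continuous 0)|]; auto|].
    simpl. rewrite Rmult_1_r. apply Rmult_le_compat_l; auto.
  - rewrite !picard_iter_S by auto.
    rewrite Rminus_plus_l_l.
    rewrite RInt_sub_integrand by (intros; apply picard_iter_continuous; auto).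
    eapply Rle_trans.
    + apply abs_RInt_le with (K := L * (3 * (M * h * (1 / 2) ^ n))).
      * intros u. apply (continuous_minus (fun u => f i (picard_iter (S n) u)));
          apply picard_iter_continuous; auto.
      * intros u Hu. eapply Rle_trans; [apply f_lip, Hi|].
        apply Rmult_le_compat_l; auto. apply IH. now apply (within_of_between t).
    + pose proof (pow_half_bounds n). simpl pow.
      assert (0 <= M * h * (1 / 2) ^ n) by (apply Rmult_le_pos; nra).
      apply Rle_trans with (L * (3 * (M * h * (1 / 2) ^ n)) * h); [apply Rmult_le_compat_l; nra|].
      nra.
Qed.

Lemma picard_iter_cauchy i n m t : (i < 3)%nat -> Rabs (t - t0) <= h -> (n <= m)%nat ->
  Rabs (coord i (picard_iter m t) - coord i (picard_iter n t)) <= 6 * M * h * (1 / 2) ^ n.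
Proof.
  intros Hi Ht Hnm.
  assert (Hk : forall k, dist3 (picard_iter (n + k) t) (picard_iter n t)
                          <= 6 * M * h * ((1 / 2) ^ n - (1 / 2) ^ (n + k))).
  { induction k as [|k IH].
    - rewrite Nat.add_0_r. unfold dist3. rewrite !Rminus_diag, Rabs_R0. lra.
    - eapply Rle_trans; [apply (dist3_triangle _ (picard_iter (n + k) t))|].
      replace (n + S k)%nat with (S (n + k)) by lia.
      pose proof (picard_iter_step (n + k) t Ht).
      change ((1 / 2) ^ S (n + k)) with (1 / 2 * (1 / 2) ^ (n + k)). lra. }
  replace m with (n + (m - n))%nat by lia.
  eapply Rle_trans; [apply dist3_coord_le|]. eapply Rle_trans; [apply Hk|].
  pose proof (pow_half_bounds (n + (m - n))). assert (0 <= M * h) by nra. nra.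
Qed.

Lemma picard_iter_cvg i t : (i < 3)%nat -> Rabs (t - t0) <= h ->
  is_lim_seq (fun n => coord i (picard_iter n t)) (real (Lim_seq (fun n => coord i (picard_iter n t)))).
Proof.
  intros Hi Ht. apply Lim_seq_correct', ex_lim_seq_cauchy_corr. intros eps.
  destruct (pow_half_small eps (6 * M * h) (cond_pos eps) ltac:(nra)) as [N HN].
  exists N. intros n m Hn Hm.
  destruct (Nat.le_ge_cases n m) as [Hnm|Hnm]; [rewrite Rabs_minus_sym|];
    (eapply Rle_lt_trans; [apply picard_iter_cauchy; eauto|]);
    (eapply Rle_lt_trans; [|exact HN]); apply Rmult_le_compat_l; try nra; now apply pow_half_antimono.
Qed.

(* Clamping the time to [[t0 - h, t0 + h]] makes the limit globally Lipschitz. *)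
Definition picard_limit i t :=
  real (Lim_seq (fun n => coord i (picard_iter n (clamp (t0 - h) (t0 + h) t)))).

Lemma clamp_within t : Rabs (clamp (t0 - h) (t0 + h) t - t0) <= h.
Proof. apply Rabs_le. pose proof (clamp_in (t0 - h) (t0 + h) t ltac:(lra)). lra. Qed.

Lemma picard_limit_tail i t n : (i < 3)%nat ->
  Rabs (picard_limit i t - coord i (picard_iter n (clamp (t0 - h) (t0 + h) t)))
    <= 6 * M * h * (1 / 2) ^ n.
Proof.
  intros Hi. unfold picard_limit.
  apply lim_dist_le with (u := fun k => coord i (picard_iter (k + n) (clamp (t0 - h) (t0 + h) t))).
  - apply (is_lim_seq_incr_n (fun k => coord i (picard_iter k (clamp (t0 - h) (t0 + h) t))) n).
    apply picard_iter_cvg; auto. apply clamp_within.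
  - intros k. apply picard_iter_cauchy; auto; [apply clamp_within|lia].
Qed.

Lemma picard_limit_lipschitz i t t' : (i < 3)%nat ->
  Rabs (picard_limit i t - picard_limit i t') <= M * Rabs (t - t').
Proof.
  intros Hi. unfold picard_limit.
  pose proof (is_lim_seq_minus' _ _ _ _ (picard_iter_cvg i _ Hi (clamp_within t))
                (picard_iter_cvg i _ Hi (clamp_within t'))) as Hl.
  rewrite <- (Rminus_0_r (_ - _)). apply (lim_dist_le _ _ _ _ Hl). intros n. rewrite Rminus_0_r.
  eapply Rle_trans; [apply picard_iter_lipschitz; auto|].
  apply Rmult_le_compat_l; auto. apply clamp_lipschitz. lra.
Qed.

Let Phi t := (picard_limit 0 t, picard_limit 1 t, picard_limit 2 t).

Lemma picard_limit_continuous i u : (i < 3)%nat -> continuous (fun u => f i (Phi u)) u.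
Proof.
  apply (comp_continuous Phi M). intros j t t' Hj.
  destruct j as [|[|[|j]]]; try lia; apply picard_limit_lipschitz; lia.
Qed.

Lemma picard_limit_t0 i : (i < 3)%nat -> picard_limit i t0 = coord i y.
Proof.
  intros Hi. unfold picard_limit. rewrite clamp_id by lra.
  rewrite (Lim_seq_ext _ (fun _ => coord i y)), Lim_seq_const; [reflexivity|].
  intros [|n]; [reflexivity|]. rewrite picard_iter_S, RInt_point by auto.
  change (zero : R) with 0. ring.
Qed.

Lemma picard_limit_integral i t : (i < 3)%nat -> Rabs (t - t0) < h ->
  picard_limit i t = coord i y + RInt (fun u => f i (Phi u)) t0 t.
Proof.
  intros Hi Ht.
  assert (Hct : forall u, Rabs (u - t0) <= h -> clamp (t0 - h) (t0 + h) u = u)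
    by (intros u Hu; apply clamp_id; apply Rabs_le_between in Hu; lra).
  enough (Rabs (picard_limit i t - (coord i y + RInt (fun u => f i (Phi u)) t0 t)) <= 0).
  { pose proof (Rabs_pos (picard_limit i t - (coord i y + RInt (fun u => f i (Phi u)) t0 t))).
    assert (Habs : Rabs (picard_limit i t - (coord i y + RInt (fun u => f i (Phi u)) t0 t)) = 0) by lra.
    apply Rabs_eq_0 in Habs. lra. }
  apply (le0_of_le_geometric _ (3 * M * h + 18 * L * M * h * h)).
  { apply Rplus_le_le_0_compat; repeat apply Rmult_le_pos; lra. }
  intros n.
  pose proof (picard_limit_tail i t (S n) Hi) as T1.
  rewrite Hct, picard_iter_S in T1 by (auto; lra).
  assert (T2 : Rabs (RInt (fun u => f i (picard_iter n u)) t0 t - RInt (fun u => f i (Phi u)) t0 t)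
               <= L * (3 * (6 * M * h * (1 / 2) ^ n)) * h).
  { rewrite RInt_sub_integrand
      by (intros; first [apply picard_iter_continuous|apply picard_limit_continuous]; auto).
    eapply Rle_trans.
    - apply abs_RInt_le.
      + intros u. apply (continuous_minus (fun u => f i (picard_iter n u)));
          [apply picard_iter_continuous|apply picard_limit_continuous]; auto.
      + intros u Hu. eapply Rle_trans; [apply f_lip, Hi|]. apply Rmult_le_compat_l; auto.
        apply dist3_le_coords. intros j Hj. rewrite Rabs_minus_sym.
        pose proof (picard_limit_tail j u n Hj) as T.
        rewrite Hct in T by (apply (within_of_between t); auto; lra).
        destruct j as [|[|[|j]]]; try lia; exact T.
    - apply Rmult_le_compat_l; [|lra]. pose proof (pow_half_bounds n).
      repeat apply Rmult_le_pos; lra. }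
  replace (picard_limit i t - (coord i y + RInt (fun u => f i (Phi u)) t0 t))
    with ((picard_limit i t - (coord i y + RInt (fun u => f i (picard_iter n u)) t0 t))
          + (RInt (fun u => f i (picard_iter n u)) t0 t - RInt (fun u => f i (Phi u)) t0 t)) by ring.
  eapply Rle_trans; [apply Rabs_triang|]. simpl pow in T1. pose proof (pow_half_bounds n). nra.
Qed.

Lemma picard_limit_derive i t : (i < 3)%nat -> Rabs (t - t0) < h ->
  is_derive (picard_limit i) t (f i (Phi t)).
Proof.
  intros Hi Ht.
  apply is_derive_ext_loc with (f := fun s => coord i y + RInt (fun u => f i (Phi u)) t0 s).
  - assert (Hd : 0 < h - Rabs (t - t0)) by lra. exists (mkposreal _ Hd). intros s Hs.
    change (Rabs (s - t) < h - Rabs (t - t0)) in Hs.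
    symmetry. apply picard_limit_integral; auto.
    replace (s - t0) with ((s - t) + (t - t0)) by ring.
    eapply Rle_lt_trans; [apply Rabs_triang|lra].
  - rewrite <- (Rplus_0_l (f i (Phi t))).
    apply (is_derive_plus (fun _ => coord i y) (fun s => RInt (fun u => f i (Phi u)) t0 s));
      [apply (is_derive_const (K := R_AbsRing) (V := R_NormedModule))|].
    apply (is_derive_RInt (fun u => f i (Phi u)) _ t0).
    + apply filter_forall. intros s. apply (RInt_correct (V := R_CompleteNormedModule)).
      apply ex_RInt_of_continuous. intros; apply picard_limit_continuous; auto.
    + apply picard_limit_continuous; auto.
Qed.

End Picard.

Lemma picard_existence (f : nat -> R * R * R -> R) L M h t0 y :
  (forall i p q, (i < 3)%nat -> Rabs (f i p - f i q) <= L * dist3 p q) ->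
  (forall i p, (i < 3)%nat -> Rabs (f i p) <= M) ->
  0 <= L -> 0 <= M -> 0 < h -> 3 * h * L <= 1 / 2 ->
  exists phi : nat -> R -> R,
    (forall i, (i < 3)%nat -> phi i t0 = coord i y) /\
    (forall i t, (i < 3)%nat -> Rabs (t - t0) < h ->
       is_derive (phi i) t (f i (phi 0%nat t, phi 1%nat t, phi 2%nat t))) /\
    (forall i t, (i < 3)%nat -> Rabs (phi i t - coord i y) <= M * Rabs (t - t0)).
Proof.
  intros. exists (picard_limit f h t0 y). split; [|split].
  - intros i Hi. now apply picard_limit_t0.
  - intros i t Hi Ht. now apply (picard_limit_derive f L M).
  - intros i t Hi.
    replace (coord i y) with (picard_limit f h t0 y i t0) by (apply picard_limit_t0; auto).
    now apply (picard_limit_lipschitz f L M).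
Qed.

(* Clamping [x] to [[c, B]] and [z] to [[-B, B]] makes the regular system globally
   Lipschitz and bounded. *)
Definition clamped_field alpha c B (i : nat) (p : R * R * R) : R :=
  match i with
  | O => cos (coord 2 p)
  | 1%nat => sin (coord 2 p)
  | _ => psi_rhs alpha (clamp c B (coord 0 p)) (clamp (- B) B (coord 1 p)) (coord 2 p)
  end.

Lemma clamped_field_lipschitz alpha c B i p q : 0 <= alpha -> 0 < c -> c <= B ->
  Rabs (clamped_field alpha c B i p - clamped_field alpha c B i q)
    <= (1 + rhs_lip_const alpha c B) * dist3 p q.
Proof.
  intros Ha Hc HcB.
  pose proof (rhs_lip_const_ge0 alpha c B Ha Hc ltac:(lra)) as HL.
  pose proof (dist3_coord_le 2 p q) as Hp. pose proof (dist3_ge0 p q).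
  destruct i as [|[|i]]; cbn [clamped_field].
  - eapply Rle_trans; [apply Rabs_cos_sub_le|nra].
  - eapply Rle_trans; [apply Rabs_sin_sub_le|nra].
  - pose proof (clamp_in c B (coord 0 p) HcB). pose proof (clamp_in c B (coord 0 q) HcB).
    pose proof (clamp_in (- B) B (coord 1 p) ltac:(lra)).
    pose proof (clamp_in (- B) B (coord 1 q) ltac:(lra)).
    eapply Rle_trans; [apply (psi_rhs_lipschitz alpha c B); auto; try lra; apply Rabs_le; lra|].
    assert (dist3 (clamp c B (coord 0 p), clamp (- B) B (coord 1 p), coord 2 p)
                  (clamp c B (coord 0 q), clamp (- B) B (coord 1 q), coord 2 q) <= dist3 p q).
    { pose proof (clamp_lipschitz c B (coord 0 p) (coord 0 q) HcB).
      pose proof (clamp_lipschitz (- B) B (coord 1 p) (coord 1 q) ltac:(lra)).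
      unfold dist3; cbn [coord fst snd] in *. lra. }
    nra.
Qed.

Lemma clamped_field_bound alpha c B i p : 0 <= alpha -> 0 < c -> c <= B ->
  Rabs (clamped_field alpha c B i p) <= 1 + (alpha * (2 * B / c ^ 2) + 1 / c).
Proof.
  intros Ha Hc HcB.
  assert (0 <= alpha * (2 * B / c ^ 2) + 1 / c).
  { apply Rplus_le_le_0_compat; [apply Rmult_le_pos; [lra|apply Rdiv_le_0_compat; nra]|].
    left; apply Rdiv_lt_0_compat; lra. }
  destruct i as [|[|i]]; cbn [clamped_field].
  - pose proof (Rabs_cos_le1 (coord 2 p)). lra.
  - pose proof (Rabs_sin_le1 (coord 2 p)). lra.
  - pose proof (clamp_in c B (coord 0 p) HcB). pose proof (clamp_in (- B) B (coord 1 p) ltac:(lra)).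
    enough (Rabs (psi_rhs alpha (clamp c B (coord 0 p)) (clamp (- B) B (coord 1 p)) (coord 2 p))
              <= alpha * (2 * B / c ^ 2) + 1 / c) by lra.
    apply psi_rhs_bound; auto; try lra; apply Rabs_le; lra.
Qed.

Lemma regular_local_existence alpha c B : 0 <= alpha -> 0 < c -> c + 1 <= B ->
  exists h, 0 < h /\ forall t0 x0 z0 p0, 2 * c <= x0 <= B - 1 -> Rabs z0 <= B - 1 ->
  exists X Z P : R -> R, X t0 = x0 /\ Z t0 = z0 /\ P t0 = p0 /\
    forall t, Rabs (t - t0) < h ->
      regular_at alpha X Z P t /\ c <= X t /\ Rabs (X t) <= B /\ Rabs (Z t) <= B.
Proof.
  intros Ha Hc HcB.
  set (L := 1 + rhs_lip_const alpha c B).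
  set (M := 1 + (alpha * (2 * B / c ^ 2) + 1 / c)).
  assert (HL : 1 <= L) by (pose proof (rhs_lip_const_ge0 alpha c B Ha Hc ltac:(lra)); unfold L; lra).
  assert (HM : 1 <= M).
  { enough (0 <= alpha * (2 * B / c ^ 2) + 1 / c) by (unfold M; lra).
    apply Rplus_le_le_0_compat; [apply Rmult_le_pos; [lra|apply Rdiv_le_0_compat; nra]|].
    left; apply Rdiv_lt_0_compat; lra. }
  set (h := Rmin (Rmin c 1 / M) (1 / (6 * L))).
  assert (Hmc : 0 < Rmin c 1 <= c /\ Rmin c 1 <= 1)
    by (split; [split|]; [apply Rmin_glb_lt|apply Rmin_l|apply Rmin_r]; lra).
  assert (Hh : 0 < h) by (apply Rmin_glb_lt; apply Rdiv_lt_0_compat; lra).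
  assert (HhM : h * M <= Rmin c 1).
  { replace (Rmin c 1) with (Rmin c 1 / M * M) by (field; lra).
    apply Rmult_le_compat_r; [lra|apply Rmin_l]. }
  assert (HhL : 3 * h * L <= 1 / 2).
  { replace (1 / 2) with (3 * (1 / (6 * L)) * L) by (field; lra).
    apply Rmult_le_compat_r; [lra|]. apply Rmult_le_compat_l; [lra|apply Rmin_r]. }
  exists h. split; [exact Hh|]. intros t0 x0 z0 p0 Hx0 Hz0.
  destruct (picard_existence (clamped_field alpha c B) L M h t0 (x0, z0, p0)) as (phi & H0 & Hd & Hb);
    try lra.
  { intros i p q _. apply clamped_field_lipschitz; lra. }
  { intros i p _. apply clamped_field_bound; lra. }
  exists (phi 0%nat), (phi 1%nat), (phi 2%nat).
  split; [apply (H0 0%nat); lia|]. split; [apply (H0 1%nat); lia|]. split; [apply (H0 2%nat); lia|].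
  intros t Ht.
  assert (Hdev : forall i, (i < 3)%nat -> Rabs (phi i t - coord i (x0, z0, p0)) <= Rmin c 1).
  { intros i Hi. eapply Rle_trans; [apply Hb, Hi|]. rewrite Rmult_comm.
    eapply Rle_trans; [|exact HhM]. apply Rmult_le_compat_r; lra. }
  pose proof (Hdev 0%nat ltac:(lia)) as D0. pose proof (Hdev 1%nat ltac:(lia)) as D1.
  cbn [coord fst snd] in D0, D1. apply Rabs_le_between in D0, D1, Hz0.
  assert (Hx : c <= phi 0%nat t <= B) by lra.
  assert (Hz : - B <= phi 1%nat t <= B) by lra.
  split; [|split; [lra|split; apply Rabs_le; lra]].
  pose proof (Hd 0%nat t ltac:(lia) Ht) as E0. pose proof (Hd 1%nat t ltac:(lia) Ht) as E1.
  pose proof (Hd 2%nat t ltac:(lia) Ht) as E2.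
  cbn [clamped_field coord fst snd] in E0, E1, E2.
  rewrite (clamp_id c B), (clamp_id (- B) B) in E2 by lra.
  exact (conj E0 (conj E1 E2)).
Qed.

Definition glue (beta : R) (f g : R -> R) s := if Rlt_dec s beta then f s else g s.

Lemma glue_left beta f g s : s < beta -> locally s (fun v => f v = glue beta f g v).
Proof.
  intros Hs. assert (Hd : 0 < beta - s) by lra. exists (mkposreal _ Hd). intros v Hv.
  change (Rabs (v - s) < beta - s) in Hv. apply Rabs_def2 in Hv.
  unfold glue. destruct (Rlt_dec v beta); [auto|lra].
Qed.

Lemma glue_right beta t0 f g s : t0 < beta -> (forall u, t0 <= u < beta -> f u = g u) ->
  beta <= s -> locally s (fun v => g v = glue beta f g v).
Proof.
  intros Ht Hag Hs. assert (Hd : 0 < s - t0) by lra. exists (mkposreal _ Hd). intros v Hv.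
  change (Rabs (v - s) < s - t0) in Hv. apply Rabs_def2 in Hv.
  unfold glue. destruct (Rlt_dec v beta); [|auto]. symmetry. apply Hag. lra.
Qed.

Lemma glue_solution alpha a beta x z psi t0 h X Z P :
  is_solution alpha a (Finite beta) x z psi -> 0 < t0 < beta -> beta < t0 + h ->
  (forall t, Rabs (t - t0) < h -> regular_at alpha X Z P t /\ X t <> 0) ->
  (forall u, t0 <= u < beta -> x u = X u /\ z u = Z u /\ psi u = P u) ->
  is_solution alpha a (Finite (t0 + h)) (glue beta x X) (glue beta z Z) (glue beta psi P).
Proof.
  intros sol Ht0 Hbeta HX Hag.
  destruct (sol_init sol) as (Hx0 & Hz0 & Hp0). destruct (sol_in_oint0 sol) as [Ha _].
  assert (Hleft : forall f g : R -> R, forall s, s < beta -> glue beta f g s = f s)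
    by (intros; unfold glue; destruct Rlt_dec; [auto|lra]).
  assert (Hright : forall f g : R -> R, forall s, beta <= s -> glue beta f g s = g s)
    by (intros; unfold glue; destruct Rlt_dec; [lra|auto]).
  assert (Hcase : forall s, in_oint a (Finite (t0 + h)) s ->
            (s < beta /\ in_oint a (Finite beta) s) \/ (beta <= s /\ Rabs (s - t0) < h)).
  { intros s [Hs1 Hs2]. simpl in Hs2. destruct (Rlt_dec s beta); [left|right].
    - split; [auto|split; auto].
    - split; [lra|apply Rabs_def1; lra]. }
  assert (Hag' : forall (f g : R -> R), (forall u, t0 <= u < beta -> f u = g u) ->
            forall s, beta <= s -> locally s (fun v => g v = glue beta f g v))
    by (intros; eapply glue_right; eauto; lra).
  split; [exact Ha|]. split; [simpl; lra|].
  refine (conj _ (conj _ (conj _ (conj _ _)))).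
  1-3: rewrite Hleft by lra; assumption.
  - intros s Hs. destruct (Hcase s Hs) as [[Hl Hi]|[Hr Hw]].
    + rewrite (Hleft psi). split; [|split].
      * apply (is_derive_ext_loc x), (sol_derive_x sol s Hi). now apply glue_left.
      * apply (is_derive_ext_loc z), (sol_derive_z sol s Hi). now apply glue_left.
      * destruct (sol_ex_derive_psi sol s Hi) as [l Hl']. exists l.
        apply (is_derive_ext_loc psi); [now apply glue_left|auto].
      * auto.
    + rewrite (Hright psi) by auto. destruct (HX s Hw) as [(D0 & D1 & D2) _]. split; [|split].
      * apply (is_derive_ext_loc X); [apply Hag'; auto; intros; apply Hag; auto|auto].
      * apply (is_derive_ext_loc Z); [apply Hag'; auto; intros; apply Hag; auto|auto].
      * eexists. apply (is_derive_ext_loc P); [apply Hag'; auto; intros; apply Hag; auto|eauto].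
  - intros s Hs Hs0. destruct (Hcase s Hs) as [[Hl Hi]|[Hr Hw]].
    + rewrite !Hleft by auto. split; [now apply (sol_x_neq0 sol)|].
      apply (is_derive_ext_loc psi), (sol_derive_psi sol s Hi Hs0). now apply glue_left.
    + rewrite !Hright by auto. destruct (HX s Hw) as [(_ & _ & D2) Hne]. split; [auto|].
      apply (is_derive_ext_loc P); [apply Hag'; auto; intros; apply Hag; auto|auto].
Qed.

(** * Global existence and the graph property *)

Lemma confined_weaken c B c' B' s0 s1 x z : c' <= c -> B <= B' ->
  confined c B s0 s1 x z -> confined c' B' s0 s1 x z.
Proof. intros Hc HB H u Hu. destruct (H u Hu) as (H1 & H2 & H3). repeat split; lra. Qed.

(* If [b = beta] were finite, the data at a time [t0] close to [beta] stay in a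
   compact set where [x >= c > 0]; the uniform existence time of the regular
   system then extends the solution beyond [beta]. *)
Lemma maximal_solution_right_global alpha a b x z psi : 0 <= alpha ->
  is_maximal_solution alpha a b x z psi -> b = p_infty.
Proof.
  intros Hal [sol Hmax]. destruct (sol_in_oint0 sol) as [Ha Hb].
  destruct b as [beta| |]; [exfalso|reflexivity|contradiction]. simpl in Hb.
  assert (HI : forall s, 0 <= s < beta -> in_oint a beta s).
  { intros s Hs. split; simpl; [destruct a; simpl in *; auto; lra|lra]. }
  set (c := x (beta / 2) / 2). set (B := beta + 2).
  assert (Hc : 0 < c).
  { unfold c. pose proof (x_pos sol Hal (beta / 2) (HI (beta / 2) ltac:(lra)) ltac:(lra)). lra. }
  assert (HcB : c + 1 <= B).
  { destruct (sol_growth sol (beta / 2) ltac:(lra) (HI (beta / 2) ltac:(lra))) as [G _].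
    apply Rabs_le_between in G. unfold c, B. lra. }
  destruct (regular_local_existence alpha c B Hal Hc HcB) as [h [Hh Hloc]].
  set (t0 := beta - Rmin h beta / 2).
  assert (Ht0 : beta / 2 <= t0 < beta /\ beta < t0 + h).
  { pose proof (Rmin_l h beta). pose proof (Rmin_r h beta).
    assert (0 < Rmin h beta) by (apply Rmin_glb_lt; lra). unfold t0. lra. }
  destruct (sol_growth sol t0 ltac:(lra) (HI t0 ltac:(lra))) as [Gx Gz].
  apply Rabs_le_between in Gx, Gz.
  assert (Hx0 : 2 * c <= x t0 <= B - 1).
  { split; [|unfold B; lra]. unfold c. destruct (Req_dec (beta / 2) t0) as [<-|]; [lra|].
    left. replace (2 * (x (beta / 2) / 2)) with (x (beta / 2)) by field.
    apply (x_strictly_increasing sol Hal); try apply HI; lra. }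
  destruct (Hloc t0 (x t0) (z t0) (psi t0) Hx0 ltac:(apply Rabs_le; unfold B; lra))
    as (X & Z & P & HX0 & HZ0 & HP0 & HXZP).
  assert (Hag : forall u, t0 <= u < beta -> x u = X u /\ z u = Z u /\ psi u = P u).
  { intros u Hu.
    apply (regular_uniqueness alpha c B x z psi X Z P Hal Hc ltac:(lra) t0 u); try lra.
    - apply (sol_solves_on sol); [lra|apply HI; lra].
    - intros v Hv. apply HXZP, Rabs_def1; lra.
    - apply (confined_weaken (x t0) (1 + u)); [lra|unfold B; lra|].
      apply (sol_confined sol); [auto|lra|apply HI; lra].
    - intros v Hv. destruct (HXZP v ltac:(apply Rabs_def1; lra)) as (_ & H1 & H2 & H3).
      repeat split; auto. }
  destruct (Hmax a (t0 + h) (glue beta x X) (glue beta z Z) (glue beta psi P)) as [_ E].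
  - apply glue_solution; auto; try lra. intros t Ht. destruct (HXZP t Ht) as (R & Hct & _).
    split; [auto|lra].
  - apply Rbar_le_refl.
  - simpl. lra.
  - intros s [_ Hs]. simpl in Hs. unfold glue. destruct (Rlt_dec s beta); [auto|lra].
  - injection E. lra.
Qed.

Lemma maximal_solution_global alpha a b x z psi : 0 <= alpha ->
  is_maximal_solution alpha a b x z psi -> a = m_infty /\ b = p_infty.
Proof.
  intros Hal HM. split; [|exact (maximal_solution_right_global _ _ _ _ _ _ Hal HM)].
  pose proof (maximal_solution_right_global _ _ _ _ _ _ Hal (reflect_maximal _ _ _ _ _ _ HM)) as E.
  destruct a; simpl in E; congruence.
Qed.

Lemma cos_psi_rises alpha x z p : 0 <= alpha -> 0 < x -> 0 < cos p <= 1 / 2 ->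
  alpha * cos p < 3 / 2 -> 0 < - sin p * psi_rhs alpha x z p.
Proof.
  intros Ha Hx HC HaC.
  set (S := sin p) in *. set (C := cos p) in *.
  assert (HSC : S ^ 2 + C ^ 2 = 1) by (pose proof (sin2_cos2 p); unfold S, C, Rsqr in *; nra).
  set (Q := x ^ 2 + z ^ 2). assert (HQ : 0 < Q) by (unfold Q; nra).
  assert (HS2 : 3 / 4 <= S ^ 2) by nra.
  unfold psi_rhs; fold S C Q.
  replace (- S * (alpha * (z * C - x * S) / Q - S / x))
    with ((S ^ 2 - alpha * C * (S * z * x / Q)) / x + alpha * x * S ^ 2 / Q) by (field; lra).
  assert (Hz : S * z * x / Q <= 1 / 2).
  { unfold Rdiv. apply (Rmult_le_reg_r Q); [lra|]. rewrite Rmult_assoc, Rinv_l, Rmult_1_r by lra.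
    pose proof (pow2_ge_0 (x - S * z)). assert (S ^ 2 <= 1) by nra. unfold Q. nra. }
  assert (0 <= alpha * x * S ^ 2 / Q)
    by (apply Rdiv_le_0_compat; [apply Rmult_le_pos; [apply Rmult_le_pos|]|]; lra).
  assert (0 < (S ^ 2 - alpha * C * (S * z * x / Q)) / x).
  { apply Rdiv_lt_0_compat; [|lra]. assert (0 <= alpha * C) by nra. nra. }
  lra.
Qed.

Section GlobalSolution.
Context {alpha : R} {x z psi : R -> R} (sol : is_solution alpha m_infty p_infty x z psi).
Hypothesis alpha_ge0 : 0 <= alpha.

(* At a minimum point of [cos psi] on [[1, s]] lying below [k], [cos_psi_rises]
   contradicts minimality from the left. *)
Lemma cos_psi_lower_bound : exists m0, 0 < m0 /\ forall s, 1 <= s -> m0 <= cos (psi s).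
Proof.
  set (u := fun s => cos (psi s)).
  set (k := Rmin (1 / 2) (1 / (alpha + 1))).
  assert (Hk : 0 < k <= 1 / 2 /\ alpha * k < 3 / 2).
  { assert (0 < 1 / (alpha + 1)) by (apply Rdiv_lt_0_compat; lra).
    assert (alpha * (1 / (alpha + 1)) < 1)
      by (apply (Rmult_lt_reg_r (alpha + 1)); [lra|field_simplify; lra]).
    assert (k <= 1 / (alpha + 1)) by apply Rmin_r.
    split; [split; [apply Rmin_glb_lt; lra|apply Rmin_l]|nra]. }
  assert (Hu1 : 0 < u 1) by (apply (cos_psi_pos sol alpha_ge0), in_oint_whole).
  exists (Rmin (u 1) k). split; [apply Rmin_glb_lt; lra|].
  pose proof (Rmin_l (u 1) k). pose proof (Rmin_r (u 1) k).
  intros s Hs. destruct (Rle_or_lt (Rmin (u 1) k) (u s)) as [|Hlt]; auto. exfalso.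
  assert (Hdu : forall v, 0 < v ->
    is_derive u v (psi_rhs alpha (x v) (z v) (psi v) * - sin (psi v))).
  { intros v Hv. apply (is_derive_comp cos psi v (- sin (psi v))).
    - auto_derive; auto; ring.
    - apply (sol_derive_psi sol); [apply in_oint_whole|lra]. }
  destruct (continuity_ab_min u 1 s Hs) as [p [Hmin Hp]].
  { intros v Hv. apply (is_derive_continuity_pt _ _ _ (Hdu v ltac:(lra))). }
  assert (Hup : u p < Rmin (u 1) k) by (pose proof (Hmin s ltac:(lra)); lra).
  assert (Hp1 : 1 < p) by (destruct (Req_dec p 1) as [->|]; lra).
  assert (Hle : psi_rhs alpha (x p) (z p) (psi p) * - sin (psi p) <= 0).
  { apply (derive_nonpos_at_left_min u p _ (p - 1)); [lra|apply Hdu; lra|].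
    intros q Hq. apply Hmin. lra. }
  assert (0 < - sin (psi p) * psi_rhs alpha (x p) (z p) (psi p)); [|lra].
  change (u p) with (cos (psi p)) in Hup.
  apply cos_psi_rises; auto.
  - apply (x_pos sol alpha_ge0); [apply in_oint_whole|lra].
  - split; [apply (cos_psi_pos sol alpha_ge0), in_oint_whole|lra].
  - apply Rle_lt_trans with (alpha * k); [apply Rmult_le_compat_l|]; lra.
Qed.

Lemma x_unbounded_above X : exists s, 0 <= s /\ X < x s.
Proof.
  destruct cos_psi_lower_bound as [m0 [Hm0 Hcos]].
  set (s := 1 + (Rabs X + 1) / m0).
  assert (Hs : m0 * (s - 1) = Rabs X + 1) by (unfold s; field; lra).
  assert (1 <= s) by (unfold s; pose proof (Rabs_pos X);
    assert (0 < (Rabs X + 1) / m0) by (apply Rdiv_lt_0_compat; lra); lra).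
  exists s. split; [lra|].
  destruct (mean_value x (fun v => cos (psi v)) 1 s) as [c [Hc Heq]]; [lra| |].
  - intros v _. apply (sol_derive_x sol), in_oint_whole.
  - pose proof (Hcos c ltac:(lra)). pose proof (x_pos sol alpha_ge0 1 (in_oint_whole 1) ltac:(lra)).
    pose proof (Rle_abs X). nra.
Qed.

Lemma solution_symmetry s : x (- s) = - x s /\ z (- s) = z s.
Proof.
  destruct (uniqueness alpha _ _ _ _ _ _ _ _ _ _ alpha_ge0 (reflect_solution _ _ _ _ _ _ sol) sol s)
    as (A1 & A2 & _); try apply in_oint_whole.
  split; lra.
Qed.

Lemma x_injective s1 s2 : x s1 = x s2 -> s1 = s2.
Proof.
  intros E. destruct (Rtotal_order s1 s2) as [Hl|[Hl|Hl]]; auto; exfalso.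
  - pose proof (x_strictly_increasing sol alpha_ge0 s1 s2 (in_oint_whole s1) (in_oint_whole s2) Hl). lra.
  - pose proof (x_strictly_increasing sol alpha_ge0 s2 s1 (in_oint_whole s2) (in_oint_whole s1) Hl). lra.
Qed.

Lemma x_surjective r : exists s, x s = r.
Proof.
  assert (Hpos : forall r, 0 <= r -> exists s, x s = r).
  { intros r' Hr. destruct (x_unbounded_above r') as [s0 [Hs0 Hx]].
    destruct (IVT_gen x 0 s0 r') as [s [_ Hs]].
    - intros t. apply (is_derive_continuity_pt _ _ _ (sol_derive_x sol t (in_oint_whole t))).
    - destruct (sol_init sol) as [-> _]. rewrite Rmin_left, Rmax_right by lra. lra.
    - now exists s. }
  destruct (Rle_or_lt 0 r) as [|Hr]; [now apply Hpos|].
  destruct (Hpos (- r) ltac:(lra)) as [s Hs]. exists (- s).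
  destruct (solution_symmetry s) as [-> _]. lra.
Qed.

End GlobalSolution.

Lemma polar_coordinates p1 p2 :
  exists t, sqrt (p1 ^ 2 + p2 ^ 2) * cos t = p1 /\ sqrt (p1 ^ 2 + p2 ^ 2) * sin t = p2.
Proof.
  set (r := sqrt (p1 ^ 2 + p2 ^ 2)).
  assert (Hr2 : r * r = p1 ^ 2 + p2 ^ 2) by (apply sqrt_sqrt; nra).
  assert (Hr0 : 0 <= r) by apply sqrt_pos.
  destruct (Req_dec r 0) as [E|E].
  { exists 0. rewrite E in Hr2 |- *. split; nra. }
  set (q := p1 / r).
  assert (Hq : -1 <= q <= 1).
  { unfold q. assert (p1 ^ 2 <= r ^ 2) by nra.
    split; apply (Rmult_le_reg_r r); try lra; unfold Rdiv; rewrite Rmult_assoc, Rinv_l by lra; nra. }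
  assert (Hs : sin (acos q) = Rabs p2 / r).
  { rewrite sin_acos by auto. apply sqrt_lem_1.
    - unfold Rsqr. nra.
    - apply Rdiv_le_0_compat; [apply Rabs_pos|lra].
    - assert (Habs : Rabs p2 * Rabs p2 = p2 * p2) by (rewrite <- Rabs_mult; apply Rabs_right; nra).
      unfold Rsqr, q. transitivity (Rabs p2 * Rabs p2 / (r * r)); [field; lra|]. rewrite Habs.
      replace (p2 * p2) with (r * r - p1 * p1) by nra. field. lra. }
  destruct (Rle_or_lt 0 p2).
  - exists (acos q). rewrite cos_acos, Hs, Rabs_right by (auto; lra). unfold q. split; field; lra.
  - exists (- acos q). rewrite cos_neg, sin_neg, cos_acos, Hs, Rabs_left by (auto; lra).
    unfold q. split; field; lra.
Qed.

(* [s] and [-s] sweep out the same circle at the same height. *)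
Lemma revolution_entire_graph (x z : R -> R) :
  (forall s1 s2, x s1 = x s2 -> s1 = s2) -> (forall r, exists s, x s = r) ->
  (forall s, x (- s) = - x s /\ z (- s) = z s) ->
  forall p1 p2, exists h, (exists s t, x s * cos t = p1 /\ x s * sin t = p2 /\ z s = h) /\
    (forall s t, x s * cos t = p1 -> x s * sin t = p2 -> z s = h).
Proof.
  intros Hinj Hsurj Hsym p1 p2. set (r := sqrt (p1 ^ 2 + p2 ^ 2)).
  assert (Hr2 : r * r = p1 ^ 2 + p2 ^ 2) by (apply sqrt_sqrt; nra).
  assert (Hr0 : 0 <= r) by apply sqrt_pos.
  destruct (Hsurj r) as [s0 Hs0]. exists (z s0). split.
  - destruct (polar_coordinates p1 p2) as [t [Ht1 Ht2]]. exists s0, t. rewrite Hs0. auto.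
  - intros s t E1 E2.
    assert (Hxs : x s * x s = r * r).
    { rewrite Hr2, <- E1, <- E2. pose proof (sin2_cos2 t). unfold Rsqr in *. nra. }
    destruct (Rle_or_lt 0 (x s)).
    + assert (x s = r) by nra. now rewrite (Hinj s s0) by congruence.
    + destruct (Hsym s) as [Hx Hz]. assert (x (- s) = r) by nra.
      now rewrite <- Hz, (Hinj (- s) s0) by congruence.
Qed.

Theorem mainTheorem11 (alpha : R) (a b : Rbar) (x z psi : R -> R) :
  0 < alpha ->
  is_maximal_solution alpha a b x z psi ->
  (* gamma is a graph over the x-axis: x is injective on I ... *)
  (forall s1 s2, in_oint a b s1 -> in_oint a b s2 -> x s1 = x s2 -> s1 = s2) /\
  (* ... over the whole x-axis *)
  (forall r : R, exists s, in_oint a b s /\ x s = r) /\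
  (* the surface of revolution (x(s) cos t, x(s) sin t, z(s)) is an entire
     graph over the plane z = 0: above each point (p1,p2) lies exactly one
     point of the surface *)
  (forall p1 p2 : R, exists h : R,
     (exists s t, in_oint a b s /\ x s * cos t = p1 /\ x s * sin t = p2 /\ z s = h) /\
     (forall s t, in_oint a b s -> x s * cos t = p1 -> x s * sin t = p2 -> z s = h)).
Proof.
  intros Hal HM. assert (Hal0 : 0 <= alpha) by lra.
  destruct (maximal_solution_global alpha a b x z psi Hal0 HM) as [-> ->].
  destruct HM as [sol _].
  split; [|split].
  - intros s1 s2 _ _. exact (x_injective sol Hal0 s1 s2).
  - intros r. destruct (x_surjective sol Hal0 r) as [s Hs]. exists s. split; [apply in_oint_whole|auto].
  - intros p1 p2.
    destruct (revolution_entire_graph x z (x_injective sol Hal0) (x_surjective sol Hal0)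
                (solution_symmetry sol Hal0) p1 p2) as (h & (s & t & Hs) & Huniq).
    exists h. split.
    + exists s, t. split; [apply in_oint_whole|auto].
    + intros s' t' _. apply Huniq.
Qed.
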